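(* If a nested sequent $\Gamma$ is derivable in $\mathsf{N.IntCK}\cup\{\mathsf{cut}\}$, then $\Gamma$ is derivable in $\mathsf{N.IntCK}$.
   Context: Language $\mathcal{L}$: formulas $\varphi ::= p \mid \bot \mid \varphi\wedge\varphi \mid \varphi\vee\varphi \mid \varphi\to\varphi \mid \varphi \mathrel{\Box\!\!\to} \varphi \mid \varphi \mathrel{\Diamond\!\!\to}\varphi$. Nested sequents: each formula $\varphi$ gets an input polarity $\varphi^\bullet$ or output polarity $\varphi^\circ$. Input sequents $\Lambda ::= \emptyset \mid \Lambda,\varphi^\bullet \mid \Lambda,[\psi:\Lambda]$ and nested sequents $\Gamma ::= \Lambda,\varphi^\circ \mid \Lambda,[\psi:\Gamma]$, where the index $\psi$ of a component $[\psi:\cdot]$ is an unpolarised formula; a nested sequent contains exactly one output formula (commas are associative and commutative). A context $\Gamma\{\ \}$ is a sequent with one hole $\{\ \}$ (possibly inside nested components), to be filled with a sequent; rules are applied only when premisses and conclusion are nested sequents. $\Gamma^{\downarrow}\{\ \}$ denotes $\Gamma\{\ \}$ with its output formula removed. Rules of $\mathsf{N.IntCK}$ (premisses / conclusion): init: $\Gamma\{p^\bullet,p^\circ\}$ ($p$ atom, no premiss); $\bot^\bullet$: $\Gamma\{\bot^\bullet\}$ (no premiss); $\wedge^\bullet$: $\Gamma\{\varphi^\bullet,\psi^\bullet\}$ / $\Gamma\{(\varphi\wedge\psi)^\bullet\}$; $\wedge^\circ$: $\Gamma\{\varphi^\circ\}$, $\Gamma\{\psi^\circ\}$ / $\Gamma\{(\varphi\wedge\psi)^\circ\}$;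 $\vee^\bullet$: $\Gamma\{\varphi^\bullet\}$, $\Gamma\{\psi^\bullet\}$ / $\Gamma\{(\varphi\vee\psi)^\bullet\}$; $\vee^\circ$: $\Gamma\{\varphi^\circ\}$ / $\Gamma\{(\varphi\vee\psi)^\circ\}$ and $\Gamma\{\psi^\circ\}$ / $\Gamma\{(\varphi\vee\psi)^\circ\}$; $\to^\bullet$: $\Gamma^\downarrow\{(\varphi\to\psi)^\bullet,\varphi^\circ\}$, $\Gamma\{\psi^\bullet\}$ / $\Gamma\{(\varphi\to\psi)^\bullet\}$; $\to^\circ$: $\Gamma\{\varphi^\bullet,\psi^\circ\}$ / $\Gamma\{(\varphi\to\psi)^\circ\}$; $\Box^\bullet$: $\varphi^\bullet,\eta^\circ$ and $\eta^\bullet,\varphi^\circ$ and $\Gamma\{(\varphi\mathrel{\Box\!\!\to}\psi)^\bullet,[\eta:\psi^\bullet,\Delta]\}$ / $\Gamma\{(\varphi\mathrel{\Box\!\!\to}\psi)^\bullet,[\eta:\Delta]\}$; $\Box^\circ$: $\Gamma\{[\varphi:\psi^\circ]\}$ / $\Gamma\{(\varphi\mathrel{\Box\!\!\to}\psi)^\circ\}$; $\Diamond^\bullet$: $\Gamma\{[\varphi:\psi^\bullet]\}$ / $\Gamma\{(\varphi\mathrel{\Diamond\!\!\to}\psi)^\bullet\}$; $\Diamond^\circ$: $\varphi^\bullet,\eta^\circ$ and $\eta^\bullet,\varphi^\circ$ and $\Gamma\{[\eta:\psi^\circ,\Delta]\}$ / $\Gamma\{(\varphi\mathrel{\Diamond\!\!\to}\psi)^\circ,[\eta:\Delta]\}$.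 A derivation is a finite tree of rule instances whose leaves are instances of init or $\bot^\bullet$. The cut rule $\mathsf{cut}$: from premisses $\Gamma^{\downarrow}\{\xi^\circ\}$ and $\Gamma\{\xi^\bullet\}$ infer $\Gamma\{\emptyset\}$ (the hole filled with the empty sequent), for any formula $\xi$ and context $\Gamma\{\ \}$ for which these are nested sequents. *)

From Stdlib Require Import List.
Import ListNotations.

Inductive form : Type :=
| Var : nat -> form
| Bot : form
| And : form -> form -> form
| Or  : form -> form -> form
| Imp : form -> form -> form
| Box : form -> form -> form
| Dia : form -> form -> form.

(* Items of a (possibly ill-formed) nested sequent:
   an input formula phi^bullet, an output formula phi^circ, or a
   component [psi : Delta] indexed by an unpolarised formula psi. *)
Inductive item : Type :=
| IIn   : form -> item
| IOut  : form -> item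
| IComp : form -> list item -> item.

Definition seqnt := list item.

Fixpoint nouts_item (i : item) : nat :=
  match i with
  | IIn _ => 0
  | IOut _ => 1
  | IComp _ u =>
      (fix go (l : list item) : nat :=
         match l with [] => 0 | j :: t => nouts_item j + go t end) u
  end.

Definition nouts (s : seqnt) : nat :=
  fold_right (fun i n => nouts_item i + n) 0 s.

(* A nested sequent contains exactly one output formula (input sequents
   contain none); the grammar of the paper generates exactly these. *)
Definition nested (s : seqnt) : Prop := nouts s = 1.

(* Commas are associative and commutative: sequents are identified up to
   reordering at every nesting depth. *)
Inductive seq_equiv : seqnt -> seqnt -> Prop :=
| se_nil : seq_equiv [] []
| se_cons i j l1 l2 : item_equiv i j -> seq_equiv l1 l2 -> seq_equiv (i :: l1) (j :: l2)
| se_swap x y l : seq_equiv (x :: y :: l) (y :: x :: l)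
| se_trans l1 l2 l3 : seq_equiv l1 l2 -> seq_equiv l2 l3 -> seq_equiv l1 l3
with item_equiv : item -> item -> Prop :=
| ie_in f : item_equiv (IIn f) (IIn f)
| ie_out f : item_equiv (IOut f) (IOut f)
| ie_comp f s t : seq_equiv s t -> item_equiv (IComp f s) (IComp f t).

(* Contexts: a sequent with exactly one hole, possibly inside components.
   Hole D   denotes   D, { }
   Down D psi c  denotes  D, [psi : c]. *)
Inductive ctx : Type :=
| Hole : seqnt -> ctx
| Down : seqnt -> form -> ctx -> ctx.

Fixpoint fill (c : ctx) (X : seqnt) : seqnt :=
  match c with
  | Hole D => D ++ X
  | Down D psi c' => D ++ [IComp psi (fill c' X)]
  end.

Fixpoint strip_item (i : item) : list item :=
  match i with
  | IIn f => [IIn f]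
  | IOut _ => []
  | IComp psi u =>
      [IComp psi ((fix go (l : list item) : list item :=
                     match l with [] => [] | j :: t => strip_item j ++ go t end) u)]
  end.

Definition strip (s : seqnt) : seqnt := flat_map strip_item s.

Fixpoint down (c : ctx) : ctx :=
  match c with
  | Hole D => Hole (strip D)
  | Down D psi c' => Down (strip D) psi (down c')
  end.

Inductive intck_rule : list seqnt -> seqnt -> Prop :=
| r_init c p :
    intck_rule [] (fill c [IIn (Var p); IOut (Var p)])
| r_bot c :
    intck_rule [] (fill c [IIn Bot])
| r_andL c f g :
    intck_rule [fill c [IIn f; IIn g]] (fill c [IIn (And f g)])
| r_andR c f g :
    intck_rule [fill c [IOut f]; fill c [IOut g]] (fill c [IOut (And f g)])
| r_orL c f g :
    intck_rule [fill c [IIn f]; fill c [IIn g]] (fill c [IIn (Or f g)])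
| r_orR1 c f g :
    intck_rule [fill c [IOut f]] (fill c [IOut (Or f g)])
| r_orR2 c f g :
    intck_rule [fill c [IOut g]] (fill c [IOut (Or f g)])
| r_impL c f g :
    intck_rule [fill (down c) [IIn (Imp f g); IOut f]; fill c [IIn g]]
               (fill c [IIn (Imp f g)])
| r_impR c f g :
    intck_rule [fill c [IIn f; IOut g]] (fill c [IOut (Imp f g)])
| r_boxL c f g e D :
    intck_rule [[IIn f; IOut e]; [IIn e; IOut f];
                fill c [IIn (Box f g); IComp e (IIn g :: D)]]
               (fill c [IIn (Box f g); IComp e D])
| r_boxR c f g :
    intck_rule [fill c [IComp f [IOut g]]] (fill c [IOut (Box f g)])
| r_diaL c f g :
    intck_rule [fill c [IComp f [IIn g]]] (fill c [IIn (Dia f g)])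
| r_diaR c f g e D :
    intck_rule [[IIn f; IOut e]; [IIn e; IOut f];
                fill c [IComp e (IOut g :: D)]]
               (fill c [IOut (Dia f g); IComp e D]).

Inductive cut_rule : list seqnt -> seqnt -> Prop :=
| r_cut c xi :
    cut_rule [fill (down c) [IOut xi]; fill c [IIn xi]] (fill c []).

Definition intck_cut_rule (prems : list seqnt) (concl : seqnt) : Prop :=
  intck_rule prems concl \/ cut_rule prems concl.

Inductive derivable (R : list seqnt -> seqnt -> Prop) : seqnt -> Prop :=
| der_rule prems concl :
    R prems concl ->
    nested concl ->
    (forall p, List.In p prems -> nested p) ->
    (forall p, List.In p prems -> derivable R p) ->
    derivable R concl
| der_equiv s t :
    seq_equiv s t -> derivable R s -> derivable R t.

(* Cut is admissible in a height-annotated copy of the cut-free calculus, by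
   induction on the cut formula and, inside it, on the sum of the heights of
   the two premisses.  If the cut formula is not principal in one premiss, the
   last rule there is permuted above the cut; this uses height-preserving
   weakening, inversion of the invertible input rules, invertibility of every
   rule on its input part, and the restoration of deleted outputs (from
   Gamma^down{X} to Gamma{X}).  Principal cuts reduce to cuts on immediate
   subformulas.  In the modal principal cases the two rules involve components
   [f : A] and [e : B] with f and e interderivable, which have to be merged into
   [e : A, B]; this merge is itself admissible, given cut on f.
   Since commas are associative and commutative at every depth, all these
   arguments rest on one combinatorial lemma describing how two decompositions
   Gamma{X} = Gamma'{Z} of the same sequent can overlap. *)

From Stdlib Require Import List Permutation Lia.
Import ListNotations.

(** * Equivalence of sequents *)

Scheme seq_equiv_mut_ind := Induction for seq_equiv Sort Prop
with item_equiv_mut_ind := Induction for item_equiv Sort Prop.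
Combined Scheme equiv_mut_ind from seq_equiv_mut_ind, item_equiv_mut_ind.

Notation "s ~~ t" := (seq_equiv s t) (at level 70).

Section NestedInduction.
Variables (P : item -> Prop) (Q : seqnt -> Prop).
Hypothesis HIn : forall f, P (IIn f).
Hypothesis HOut : forall f, P (IOut f).
Hypothesis HComp : forall f u, Q u -> P (IComp f u).
Hypothesis Hnil : Q [].
Hypothesis Hcons : forall i l, P i -> Q l -> Q (i :: l).

Fixpoint item_nested_ind (i : item) : P i :=
  match i with
  | IIn f => HIn f
  | IOut f => HOut f
  | IComp f u => HComp f u ((fix go (l : list item) : Q l :=
       match l with [] => Hnil | j :: t => Hcons j t (item_nested_ind j) (go t) end) u)
  end.

Lemma seqnt_nested_ind : forall l, Q l.
Proof. induction l; auto using item_nested_ind. Qed.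
End NestedInduction.

Lemma equiv_refl_mut : (forall i, item_equiv i i) /\ (forall l, l ~~ l).
Proof.
  assert (H : forall l, l ~~ l).
  { apply (seqnt_nested_ind (fun i => item_equiv i i)); intros; constructor; auto. }
  split; auto. intros [f|f|f u]; constructor; auto.
Qed.

Lemma eqv_refl l : l ~~ l. Proof. apply equiv_refl_mut. Qed.

Lemma ie_refl i : item_equiv i i. Proof. apply equiv_refl_mut. Qed.

#[export] Hint Resolve eqv_refl ie_refl : core.

Lemma equiv_sym_mut : (forall l1 l2, l1 ~~ l2 -> l2 ~~ l1) /\
  (forall i j, item_equiv i j -> item_equiv j i).
Proof.
  apply (equiv_mut_ind (fun l1 l2 _ => l2 ~~ l1) (fun i j _ => item_equiv j i));
    intros; solve [constructor; auto | apply se_swap | eapply se_trans; eauto].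
Qed.

Lemma eqv_sym l1 l2 : l1 ~~ l2 -> l2 ~~ l1. Proof. apply equiv_sym_mut. Qed.

Lemma ie_sym i j : item_equiv i j -> item_equiv j i. Proof. apply equiv_sym_mut. Qed.

Lemma eqv_trans l1 l2 l3 : l1 ~~ l2 -> l2 ~~ l3 -> l1 ~~ l3. Proof. apply se_trans. Qed.

Lemma ie_trans i j k : item_equiv i j -> item_equiv j k -> item_equiv i k.
Proof. intros H1 H2; inversion H1; subst; inversion H2; subst; constructor; eauto using eqv_trans. Qed.

Lemma eqv_perm l1 l2 : Permutation l1 l2 -> l1 ~~ l2.
Proof. induction 1. constructor. constructor; auto. apply se_swap. eapply se_trans; eauto. Qed.

Lemma eqv_app_r l b1 b2 : b1 ~~ b2 -> l ++ b1 ~~ l ++ b2.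
Proof. induction l; simpl; auto. constructor; auto. Qed.

Lemma eqv_app a1 a2 b1 b2 : a1 ~~ a2 -> b1 ~~ b2 -> a1 ++ b1 ~~ a2 ++ b2.
Proof.
  intros H; revert b1 b2; induction H; intros b1 b2 Hb; simpl.
  - auto.
  - constructor; auto.
  - eapply se_trans; [apply se_swap|]. constructor; auto. constructor; auto. apply eqv_app_r; auto.
  - eapply se_trans; [apply IHseq_equiv1; eauto|]. apply IHseq_equiv2; auto.
Qed.

Lemma eqv_cons i j a b : item_equiv i j -> a ~~ b -> i :: a ~~ j :: b.
Proof. constructor; auto. Qed.

Lemma eqv_app_comm a b : a ++ b ~~ b ++ a.
Proof. apply eqv_perm, Permutation_app_comm. Qed.

Lemma eqv_mid l1 l2 a b : item_equiv a b -> l1 ++ a :: l2 ~~ l1 ++ b :: l2.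
Proof. intros; apply eqv_app_r; constructor; auto. Qed.

Lemma ie_comp p u v : u ~~ v -> item_equiv (IComp p u) (IComp p v).
Proof. constructor; auto. Qed.

Lemma eqv_single_comp p u v : u ~~ v -> [IComp p u] ~~ [IComp p v].
Proof. intros; constructor; [constructor; auto|constructor]. Qed.

Lemma eqv_Forall2 l1 l2 : Forall2 item_equiv l1 l2 -> l1 ~~ l2.
Proof. induction 1; constructor; auto. Qed.

Lemma Forall2_Permutation_commute {A B : Type} (R : A -> B -> Prop) l m m' :
  Forall2 R l m -> Permutation m m' -> exists l', Permutation l l' /\ Forall2 R l' m'.
Proof.
  intros HF HP; revert l HF; induction HP; intros.
  - exists l; auto.
  - inversion HF; subst. destruct (IHHP _ H3) as [l'' [? ?]]. exists (x0 :: l''); auto.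
  - inversion HF as [|a b l1 m1 Ha Hr]; subst. inversion Hr as [|c d l2 m2 Hc Hr2]; subst.
    exists (c :: a :: l2). split; [constructor|]; auto.
  - destruct (IHHP1 _ HF) as [l1 [? ?]]. destruct (IHHP2 _ H0) as [l2 [? ?]].
    exists l2; split; eauto using Permutation_trans.
Qed.

Lemma Forall2_ie_trans l1 l2 l3 : Forall2 item_equiv l1 l2 -> Forall2 item_equiv l2 l3 ->
  Forall2 item_equiv l1 l3.
Proof.
  intros H; revert l3; induction H; intros l3 H'; inversion H'; subst; constructor; eauto using ie_trans.
Qed.

Lemma eqv_Permutation_Forall2 l1 l2 : l1 ~~ l2 <-> exists u, Permutation l1 u /\ Forall2 item_equiv u l2.
Proof.
  split.
  - induction 1.
    + exists []; auto.
    + destruct IHseq_equiv as [u [? ?]]. exists (i :: u); auto.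
    + exists (y :: x :: l); split; [constructor|]. repeat constructor; auto.
      clear. induction l; constructor; auto.
    + destruct IHseq_equiv1 as [u1 [? ?]]. destruct IHseq_equiv2 as [u2 [? ?]].
      destruct (Forall2_Permutation_commute _ _ _ _ H2 H3) as [u3 [? ?]].
      exists u3; split; eauto using Permutation_trans, Forall2_ie_trans.
  - intros [u [? ?]]. eapply se_trans; [apply eqv_perm; eauto| apply eqv_Forall2; auto].
Qed.

Lemma Permutation_app_cross (A B C E : list item) : Permutation (A ++ B) (C ++ E) ->
  exists A1 A2 B1 B2, Permutation A (A1 ++ A2) /\ Permutation B (B1 ++ B2) /\
    Permutation C (A1 ++ B1) /\ Permutation E (A2 ++ B2).
Proof.
  revert A B E; induction C as [|y C IH]; intros A B E HP.
  - exists [], A, [], B; simpl in *; repeat split; auto using Permutation_refl, Permutation_sym.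
  - simpl in HP.
    assert (Hin : In y (A ++ B)) by (apply (Permutation_in y (Permutation_sym HP)); left; auto).
    apply in_app_or in Hin as [Hin|Hin].
    + apply in_split in Hin as [a1 [a2 ->]].
      assert (HP' : Permutation ((a1 ++ a2) ++ B) (C ++ E)).
      { apply Permutation_cons_inv with y.
        eapply Permutation_trans; [|apply HP]. rewrite <- !app_assoc. simpl.
        apply Permutation_middle. }
      destruct (IH _ _ _ HP') as [A1 [A2 [B1 [B2 [H1 [H2 [H3 H4]]]]]]].
      exists (y :: A1), A2, B1, B2; repeat split; auto.
      * eapply Permutation_trans; [apply Permutation_sym, Permutation_middle|]. simpl; constructor; auto.
      * simpl; constructor; auto.
    + apply in_split in Hin as [b1 [b2 ->]].
      assert (HP' : Permutation (A ++ (b1 ++ b2)) (C ++ E)).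
      { apply Permutation_cons_inv with y.
        eapply Permutation_trans; [|apply HP].
        eapply Permutation_trans; [apply Permutation_middle|].
        apply Permutation_app_head. apply Permutation_middle. }
      destruct (IH _ _ _ HP') as [A1 [A2 [B1 [B2 [H1 [H2 [H3 H4]]]]]]].
      exists A1, A2, (y :: B1), B2; repeat split; auto.
      * eapply Permutation_trans; [apply Permutation_sym, Permutation_middle|]. simpl; constructor; auto.
      * simpl. eapply Permutation_trans; [|apply Permutation_middle]. constructor; auto.
Qed.

Lemma eqv_app_cross (A B C E : seqnt) : A ++ B ~~ C ++ E ->
  exists A1 A2 B1 B2, A ~~ A1 ++ A2 /\ B ~~ B1 ++ B2 /\ C ~~ A1 ++ B1 /\ E ~~ A2 ++ B2.
Proof.
  intros H. apply eqv_Permutation_Forall2 in H as [u [HP HF]].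
  apply Forall2_app_inv_r in HF as [u1 [u2 [HF1 [HF2 ->]]]].
  destruct (Permutation_app_cross _ _ _ _ HP) as [A1 [A2 [B1 [B2 [H1 [H2 [H3 H4]]]]]]].
  exists A1, A2, B1, B2; repeat split; try (apply eqv_perm; assumption).
  - eapply se_trans; [apply eqv_sym, eqv_Forall2; eassumption | apply eqv_perm; assumption].
  - eapply se_trans; [apply eqv_sym, eqv_Forall2; eassumption | apply eqv_perm; assumption].
Qed.

Lemma eqv_length l1 l2 : l1 ~~ l2 -> length l1 = length l2.
Proof.
  intros H; apply eqv_Permutation_Forall2 in H as [u [HP HF]]. rewrite (Permutation_length HP).
  eapply Forall2_length; eauto.
Qed.

Lemma eqv_nil_l l : [] ~~ l -> l = [].
Proof.
  intros H; apply eqv_Permutation_Forall2 in H as [u [HP HF]]. apply Permutation_nil in HP; subst.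
  inversion HF; auto.
Qed.

Lemma eqv_nil_r l : l ~~ [] -> l = [].
Proof. intros H; apply eqv_nil_l, eqv_sym; auto. Qed.

Lemma eqv_cons_inv x l m : x :: l ~~ m ->
  exists m1 y m2, m = m1 ++ y :: m2 /\ item_equiv x y /\ l ~~ m1 ++ m2.
Proof.
  intros H; apply eqv_Permutation_Forall2 in H as [u [HP HF]].
  assert (Hin : In x u) by (eapply Permutation_in; eauto; left; auto).
  apply in_split in Hin as [u1 [u2 ->]].
  apply Permutation_cons_app_inv in HP.
  apply Forall2_app_inv_l in HF as [v1 [v2 [HF1 [HF2 ->]]]].
  inversion HF2 as [|a y b v2' Hxy HF3]; subst.
  exists v1, y, v2'; repeat split; auto.
  eapply eqv_trans; [apply eqv_perm; eauto|]. apply eqv_Forall2. apply Forall2_app; auto.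
Qed.

Lemma eqv_cons_app x l A B : x :: l ~~ A ++ B ->
  (exists A1 y A2, A = A1 ++ y :: A2 /\ item_equiv x y /\ l ~~ A1 ++ A2 ++ B) \/
  (exists B1 y B2, B = B1 ++ y :: B2 /\ item_equiv x y /\ l ~~ A ++ B1 ++ B2).
Proof.
  intros H; apply eqv_cons_inv in H as [m1 [y [m2 [E [Hxy Hl]]]]].
  apply app_eq_app in E as [w [[E1 E2]|[E1 E2]]].
  - destruct w as [|z w].
    + simpl in E2. subst. rewrite app_nil_r in *. right. exists [], y, m2; simpl; repeat split; auto.
    + inversion E2; subst. left. exists m1, z, w; repeat split; auto; rewrite <- ?app_assoc; auto.
  - subst. right. exists w, y, m2; repeat split; auto. rewrite app_assoc; auto.
Qed.

Lemma eqv_single_app x M X0 : [x] ~~ M ++ X0 -> M <> [] -> exists y, M = [y] /\ X0 = [] /\ item_equiv x y.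
Proof.
  intros H HM. assert (L := eqv_length _ _ H). rewrite length_app in L. simpl in L.
  destruct M as [|y [|]]; [congruence| |simpl in L; lia].
  destruct X0; [|simpl in L; lia]. exists y; repeat split; auto.
  simpl in H. apply eqv_cons_inv in H as [m1 [z [m2 [E [Hz _]]]]].
  destruct m1 as [|? [|]]; simpl in E; inversion E; subst; auto.
Qed.

Lemma eqv_cons_single x y l : x :: l ~~ [y] -> l = [] /\ item_equiv x y.
Proof.
  intros H. assert (L := eqv_length _ _ H). simpl in L. destruct l; [|simpl in L; lia].
  split; auto. apply eqv_cons_inv in H as [m1 [z [m2 [E [Hz _]]]]].
  destruct m1 as [|? []]; simpl in E; inversion E; subst; auto.
Qed.

Lemma ie_in_inv f y : item_equiv (IIn f) y -> y = IIn f.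
Proof. intros H; inversion H; auto. Qed.

Lemma ie_out_inv f y : item_equiv (IOut f) y -> y = IOut f.
Proof. intros H; inversion H; auto. Qed.

Lemma ie_comp_inv p u y : item_equiv (IComp p u) y -> exists v, y = IComp p v /\ u ~~ v.
Proof. intros H; inversion H; subst; eauto. Qed.

Lemma ie_comp_comp_inv p u q v : item_equiv (IComp p u) (IComp q v) -> p = q /\ u ~~ v.
Proof. intros H; inversion H; subst; auto. Qed.

Definition form_eq_dec (f g : form) : {f = g} + {f <> g}.
Proof. decide equality; apply PeanoNat.Nat.eq_dec. Defined.

Fixpoint item_eq_dec (i j : item) {struct i} : {i = j} + {i <> j}.
Proof.
  destruct i as [f|f|f u], j as [g|g|g v]; try (right; discriminate).
  - destruct (form_eq_dec f g); [left; subst; auto|right; congruence].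
  - destruct (form_eq_dec f g); [left; subst; auto|right; congruence].
  - destruct (form_eq_dec f g); [|right; congruence]. subst.
    assert (H : {u = v} + {u <> v}).
    { revert v; induction u as [|a u IH]; intros [|b v]; try (right; discriminate); [left; auto|].
      destruct (item_eq_dec a b); [|right; congruence]. subst.
      destruct (IH v); [left; subst; auto|right; congruence]. }
    destruct H; [left; subst; auto|right; congruence].
Defined.

Arguments item_eq_dec : simpl never.

Ltac perm_solve :=
  apply (Permutation_count_occ item_eq_dec); intro;
  repeat (rewrite ?count_occ_app; simpl);
  repeat match goal with |- context [item_eq_dec ?a ?b] => destruct (item_eq_dec a b) end;
  lia.

Ltac eqv_solve := apply eqv_perm; perm_solve.

(** * Stripping output formulas *)

Lemma strip_app a b : strip (a ++ b) = strip a ++ strip b.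
Proof. unfold strip; apply flat_map_app. Qed.

Lemma strip_cons i a : strip (i :: a) = strip_item i ++ strip a.
Proof. reflexivity. Qed.

Lemma strip_item_comp f u : strip_item (IComp f u) = [IComp f (strip u)].
Proof. reflexivity. Qed.

Lemma strip_single i : strip [i] = strip_item i.
Proof. unfold strip; simpl; apply app_nil_r. Qed.

Lemma nouts_app a b : nouts (a ++ b) = nouts a + nouts b.
Proof. induction a; simpl; auto. unfold nouts in *; simpl. rewrite IHa; lia. Qed.

Lemma nouts_cons i a : nouts (i :: a) = nouts_item i + nouts a.
Proof. reflexivity. Qed.

Lemma nouts_single i : nouts [i] = nouts_item i.
Proof. unfold nouts; simpl; lia. Qed.

Lemma nouts_item_comp f u : nouts_item (IComp f u) = nouts u.
Proof. simpl. induction u; simpl; auto. Qed.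

Lemma strip_nil : strip [] = []. Proof. reflexivity. Qed.

Lemma strip_item_in f : strip_item (IIn f) = [IIn f]. Proof. reflexivity. Qed.

Lemma strip_item_out f : strip_item (IOut f) = []. Proof. reflexivity. Qed.

Lemma nouts_nil : nouts [] = 0. Proof. reflexivity. Qed.

Lemma nouts_item_in f : nouts_item (IIn f) = 0. Proof. reflexivity. Qed.

Lemma nouts_item_out f : nouts_item (IOut f) = 1. Proof. reflexivity. Qed.

Lemma eqv_strip_nouts_mut :
  (forall l1 l2, l1 ~~ l2 -> strip l1 ~~ strip l2 /\ nouts l1 = nouts l2) /\
  (forall i j, item_equiv i j -> strip_item i ~~ strip_item j /\ nouts_item i = nouts_item j).
Proof.
  apply (equiv_mut_ind (fun l1 l2 _ => strip l1 ~~ strip l2 /\ nouts l1 = nouts l2)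
           (fun i j _ => strip_item i ~~ strip_item j /\ nouts_item i = nouts_item j)); intros.
  - split; auto.
  - destruct H, H0. rewrite !strip_cons, !nouts_cons. split; [apply eqv_app; auto| lia].
  - rewrite !strip_cons, !nouts_cons. split; [|lia]. rewrite !app_assoc. apply eqv_app; auto.
    apply eqv_app_comm.
  - destruct H, H0. split; [eapply eqv_trans; eauto| lia].
  - split; auto.
  - split; auto.
  - destruct H. rewrite !strip_item_comp, !nouts_item_comp. split; auto. apply eqv_single_comp; auto.
Qed.

Lemma strip_eqv l1 l2 : l1 ~~ l2 -> strip l1 ~~ strip l2.
Proof. apply eqv_strip_nouts_mut. Qed.

Lemma nouts_eqv l1 l2 : l1 ~~ l2 -> nouts l1 = nouts l2.
Proof. apply eqv_strip_nouts_mut. Qed.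

Lemma strip_strip_mut : (forall i, strip (strip_item i) = strip_item i) /\
  (forall l, strip (strip l) = strip l).
Proof.
  assert (H : forall l, strip (strip l) = strip l).
  { apply (seqnt_nested_ind (fun i => strip (strip_item i) = strip_item i)
                            (fun l => strip (strip l) = strip l)); intros; auto.
    - rewrite strip_item_comp, strip_single, strip_item_comp, H. reflexivity.
    - rewrite strip_cons, strip_app, H, H0. reflexivity. }
  split; auto. intros [f|f|f u]; auto. rewrite strip_item_comp, strip_single, strip_item_comp, H; auto.
Qed.

Lemma strip_strip l : strip (strip l) = strip l. Proof. apply strip_strip_mut. Qed.

Lemma nouts_strip l : nouts (strip l) = 0.
Proof.
  apply (seqnt_nested_ind (fun i => nouts (strip_item i) = 0) (fun l => nouts (strip l) = 0)); intros; auto.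
  - rewrite strip_item_comp, nouts_single, nouts_item_comp, H. auto.
  - rewrite strip_cons, nouts_app, H, H0. auto.
Qed.

Lemma strip_nouts0 l : nouts l = 0 -> strip l = l.
Proof.
  revert l; apply (seqnt_nested_ind (fun i => nouts_item i = 0 -> strip_item i = [i])
                                     (fun l => nouts l = 0 -> strip l = l)); intros; auto.
  - simpl in H; discriminate.
  - rewrite strip_item_comp. rewrite nouts_item_comp in H0. rewrite H; auto.
  - rewrite nouts_cons in H1. rewrite strip_cons, H, H0; auto; lia.
Qed.

Arguments strip : simpl never.
Arguments strip_item : simpl never.
Arguments nouts : simpl never.
Arguments nouts_item : simpl never.

Lemma item_out_or x : (exists f, x = IOut f) \/ (exists y, strip_item x = [y] /\ forall f, y <> IOut f).
Proof.
  destruct x as [f|f|f u]; [right|left|right]; eauto.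
  - exists (IIn f); split; [reflexivity|discriminate].
  - exists (IComp f (strip u)); split; [apply strip_item_comp|discriminate].
Qed.

Lemma strip_split s : forall A B, strip s ~~ A ++ B ->
  exists s1 s2, s ~~ s1 ++ s2 /\ strip s1 ~~ A /\ strip s2 ~~ B.
Proof.
  induction s as [|x s IH]; intros A B H.
  - rewrite strip_nil in H. apply eqv_nil_l in H. apply app_eq_nil in H as [-> ->].
    exists [], []; repeat split; auto.
  - rewrite strip_cons in H. destruct (item_out_or x) as [[f ->]|[y [Hy _]]].
    + rewrite strip_item_out in H. simpl in H. destruct (IH _ _ H) as [s1 [s2 [H1 [H2 H3]]]].
      exists (IOut f :: s1), s2; repeat split; auto.
      * simpl. constructor; auto.
    + rewrite Hy in H. simpl in H.
      apply eqv_cons_app in H as [[A1 [y' [A2 [-> [Hy' HR]]]]]|[B1 [y' [B2 [-> [Hy' HR]]]]]].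
      * rewrite app_assoc in HR. destruct (IH _ _ HR) as [s1 [s2 [H1 [H2 H3]]]].
        exists (x :: s1), s2; repeat split; auto.
        -- simpl; constructor; auto.
        -- rewrite strip_cons, Hy. simpl. eapply eqv_trans; [apply eqv_cons; [apply Hy'|apply H2]|].
           eqv_solve.
      * assert (HR' : strip s ~~ (A ++ (B1 ++ B2))) by (eapply eqv_trans; [apply HR|]; eqv_solve).
        destruct (IH _ _ HR') as [s1 [s2 [H1 [H2 H3]]]].
        exists s1, (x :: s2); repeat split; auto.
        -- eapply eqv_trans; [apply eqv_cons; [apply ie_refl|apply H1]|]. eqv_solve.
        -- rewrite strip_cons, Hy. simpl. eapply eqv_trans; [apply eqv_cons; [apply Hy'|apply H3]|].
           eqv_solve.
Qed.

Lemma strip_single_inv E y : strip E ~~ [y] ->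
  exists x O, E ~~ x :: O /\ strip O = [] /\ (exists y', strip_item x = [y'] /\ item_equiv y' y).
Proof.
  induction E as [|x E IH]; intros H.
  - rewrite strip_nil in H. apply eqv_length in H. discriminate.
  - rewrite strip_cons in H. destruct (item_out_or x) as [[f ->]|[z [Hz _]]].
    + rewrite strip_item_out in H. simpl in H. destruct (IH H) as [x' [O [H1 [H2 H3]]]].
      exists x', (IOut f :: O); split; [|split; [|auto]].
      * eapply eqv_trans; [apply eqv_cons; [apply ie_refl|apply H1]|]. apply se_swap.
      * rewrite strip_cons, strip_item_out, H2; auto.
    + rewrite Hz in H. simpl in H. apply eqv_cons_single in H as [H1 H2].
      exists x, E; split; [auto|split; [auto|eauto]].
Qed.

Lemma strip_single_in E f : strip E ~~ [IIn f] -> exists O, E ~~ IIn f :: O /\ strip O = [].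
Proof.
  intros H; destruct (strip_single_inv _ _ H) as [x [O [H1 [H2 [y' [H3 H4]]]]]].
  apply ie_sym, ie_in_inv in H4; subst.
  destruct x as [g|g|g u];
    [rewrite strip_item_in in H3|rewrite strip_item_out in H3|rewrite strip_item_comp in H3];
    inversion H3; subst. eauto.
Qed.

Lemma strip_single_comp E p v : strip E ~~ [IComp p v] ->
  exists u O, E ~~ IComp p u :: O /\ strip O = [] /\ strip u ~~ v.
Proof.
  intros H; destruct (strip_single_inv _ _ H) as [x [O [H1 [H2 [y' [H3 H4]]]]]].
  apply ie_sym, ie_comp_inv in H4 as [w [-> Hw]].
  destruct x as [g|g|g u];
    [rewrite strip_item_in in H3|rewrite strip_item_out in H3|rewrite strip_item_comp in H3];
    inversion H3; subst. exists u, O; repeat split; auto. apply eqv_sym; auto.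
Qed.

(** * Contexts *)

Lemma fill_eqv c X Y : X ~~ Y -> fill c X ~~ fill c Y.
Proof.
  induction c; simpl; intros H.
  - apply eqv_app_r; auto.
  - apply eqv_app_r, eqv_single_comp; auto.
Qed.

Lemma strip_fill c X : strip (fill c X) = fill (down c) (strip X).
Proof.
  induction c; simpl.
  - apply strip_app.
  - rewrite strip_app, strip_single, strip_item_comp, IHc. reflexivity.
Qed.

Fixpoint nouts_ctx (c : ctx) : nat :=
  match c with Hole D => nouts D | Down D _ c' => nouts D + nouts_ctx c' end.

Lemma nouts_fill c X : nouts (fill c X) = nouts_ctx c + nouts X.
Proof.
  induction c; simpl.
  - apply nouts_app.
  - rewrite nouts_app, nouts_single, nouts_item_comp, IHc. lia.
Qed.

Lemma down_down c : down (down c) = down c.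
Proof. induction c; simpl; rewrite ?strip_strip, ?IHc; auto. Qed.

Lemma nouts_ctx_down c : nouts_ctx (down c) = 0.
Proof. induction c; simpl; rewrite ?nouts_strip, ?IHc; auto. Qed.

Fixpoint ceq (c1 c2 : ctx) : Prop :=
  match c1, c2 with
  | Hole D1, Hole D2 => D1 ~~ D2
  | Down D1 p1 c1', Down D2 p2 c2' => D1 ~~ D2 /\ p1 = p2 /\ ceq c1' c2'
  | _, _ => False
  end.

Lemma ceq_refl c : ceq c c. Proof. induction c; simpl; auto. Qed.

Lemma ceq_sym c1 c2 : ceq c1 c2 -> ceq c2 c1.
Proof. revert c2; induction c1; destruct c2; simpl; intuition; subst; auto using eqv_sym. Qed.

Lemma ceq_trans c1 c2 c3 : ceq c1 c2 -> ceq c2 c3 -> ceq c1 c3.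
Proof. revert c2 c3; induction c1; destruct c2, c3; simpl; intuition; subst; eauto using eqv_trans. Qed.

Lemma ceq_fill c1 c2 X1 X2 : ceq c1 c2 -> X1 ~~ X2 -> fill c1 X1 ~~ fill c2 X2.
Proof.
  revert c2; induction c1; destruct c2; simpl; intuition; subst; apply eqv_app; auto.
  apply eqv_single_comp; auto.
Qed.

Lemma ceq_down c1 c2 : ceq c1 c2 -> ceq (down c1) (down c2).
Proof. revert c2; induction c1; destruct c2; simpl; intuition; subst; auto using strip_eqv. Qed.

Lemma ceq_nouts_ctx c1 c2 : ceq c1 c2 -> nouts_ctx c1 = nouts_ctx c2.
Proof. revert c2; induction c1; destruct c2; simpl; intuition; subst; auto using nouts_eqv. Qed.

Lemma down_nouts_ctx0 c : nouts_ctx c = 0 -> ceq (down c) c.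
Proof.
  induction c; simpl; intros H.
  - rewrite strip_nouts0; auto.
  - rewrite strip_nouts0 by lia. repeat split; auto. apply IHc; lia.
Qed.

Fixpoint ccomp (c d : ctx) : ctx :=
  match c with
  | Hole D => match d with Hole E => Hole (D ++ E) | Down E p d' => Down (D ++ E) p d' end
  | Down D p c' => Down D p (ccomp c' d)
  end.

Lemma fill_ccomp c d X : fill (ccomp c d) X = fill c (fill d X).
Proof. induction c; simpl; [destruct d; simpl; rewrite app_assoc; auto| rewrite IHc; auto]. Qed.

Lemma down_ccomp c d : down (ccomp c d) = ccomp (down c) (down d).
Proof. induction c; simpl; [destruct d; simpl; rewrite strip_app; auto| rewrite IHc; auto]. Qed.

Lemma ceq_ccomp c1 c2 d1 d2 : ceq c1 c2 -> ceq d1 d2 -> ceq (ccomp c1 d1) (ccomp c2 d2).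
Proof.
  revert c2; induction c1; destruct c2; simpl; intuition; subst;
  destruct d1, d2; simpl in *; intuition; subst; auto using eqv_app.
Qed.

Lemma nouts_ctx_ccomp c d : nouts_ctx (ccomp c d) = nouts_ctx c + nouts_ctx d.
Proof. induction c; simpl; [destruct d; simpl; rewrite nouts_app; lia| rewrite IHc; lia]. Qed.

Ltac strip_simpl :=
  repeat (rewrite ?strip_app, ?strip_cons, ?strip_nil, ?strip_item_in, ?strip_item_out,
            ?strip_item_comp, ?strip_fill, ?strip_strip; simpl).

Ltac nouts_simpl :=
  repeat (rewrite ?nouts_app, ?nouts_cons, ?nouts_nil, ?nouts_item_in, ?nouts_item_out,
            ?nouts_item_comp, ?nouts_fill, ?nouts_strip; simpl).

Lemma fill_ccomp_Hole a W V : fill (ccomp a (Hole W)) V = fill a (W ++ V).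
Proof. rewrite fill_ccomp; reflexivity. Qed.

Lemma fill_down_ccomp_Hole a W V : fill (down (ccomp a (Hole W))) V = fill (down a) (strip W ++ V).
Proof. rewrite down_ccomp, fill_ccomp; reflexivity. Qed.

Lemma fill_ccomp_Down c W f c3 V : fill (ccomp c (Down W f c3)) V = fill c (W ++ [IComp f (fill c3 V)]).
Proof. rewrite fill_ccomp; reflexivity. Qed.

Lemma fill_down_ccomp_Down c W f c3 V :
  fill (down (ccomp c (Down W f c3))) V = fill (down c) (strip W ++ [IComp f (fill (down c3) V)]).
Proof. rewrite down_ccomp, fill_ccomp; reflexivity. Qed.

Lemma fill_ccomp_Down_Hole c e D V : fill (ccomp c (Down [] e (Hole D))) V = fill c [IComp e (D ++ V)].
Proof. rewrite fill_ccomp; reflexivity. Qed.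

Lemma fill_down_ccomp_Down_Hole c e D V :
  fill (down (ccomp c (Down [] e (Hole D)))) V = fill (down c) [IComp e (strip D ++ V)].
Proof. rewrite down_ccomp, fill_ccomp; reflexivity. Qed.

Lemma fill_ccomp_Down_app c e B c3 V :
  fill (ccomp c (Down [] e (ccomp (Hole B) c3))) V = fill c [IComp e (B ++ fill c3 V)].
Proof. rewrite fill_ccomp; simpl; destruct c3; simpl; rewrite ?app_assoc; reflexivity. Qed.

Lemma fill_down_ccomp_Down_app c e B c3 V :
  fill (down (ccomp c (Down [] e (ccomp (Hole B) c3)))) V =
    fill (down c) [IComp e (strip B ++ fill (down c3) V)].
Proof.
  rewrite down_ccomp, fill_ccomp; simpl.
  destruct c3; simpl; strip_simpl; rewrite ?app_assoc; reflexivity.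
Qed.

Lemma fill_ccomp_Down_cons c W h w c3 V :
  fill (ccomp c (Down W h (ccomp (Hole [w]) c3))) V = fill c (W ++ [IComp h (w :: fill c3 V)]).
Proof. rewrite fill_ccomp; simpl; destruct c3; reflexivity. Qed.

Lemma fill_down_ccomp_Down_cons c W h w c3 V :
  fill (down (ccomp c (Down W h (ccomp (Hole [w]) c3)))) V =
    fill (down c) (strip W ++ [IComp h (strip_item w ++ fill (down c3) V)]).
Proof.
  rewrite down_ccomp, fill_ccomp; simpl; destruct c3; simpl; strip_simpl; rewrite ?app_assoc;
  reflexivity.
Qed.

Lemma fill_ceq_ccomp_Hole c X c' Z : ceq c (ccomp c' (Hole Z)) -> fill c X ~~ fill c' (Z ++ X).
Proof.
  intros H. eapply eqv_trans; [apply ceq_fill; [apply H|apply eqv_refl]|]. rewrite fill_ccomp; auto.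
Qed.

Lemma fill_shared_hole c a Z0 E c' X0 Y : ceq c (ccomp a (Hole (Z0 ++ E))) ->
  ceq c' (ccomp a (Hole (X0 ++ E))) ->
  fill c Y ~~ fill a (Z0 ++ E ++ Y) /\ fill c' Y ~~ fill a (X0 ++ E ++ Y).
Proof.
  intros H1 H2; split.
  - eapply eqv_trans; [apply fill_ceq_ccomp_Hole, H1|]. rewrite app_assoc; auto.
  - eapply eqv_trans; [apply fill_ceq_ccomp_Hole, H2|]. rewrite app_assoc; auto.
Qed.

Lemma fill_shared_hole_down c a1 Z0 E1 cR : ceq c (ccomp a1 (Hole (Z0 ++ E1))) ->
  ceq cR (ccomp a1 (Hole E1)) ->
  (forall Y, fill c Y ~~ fill cR (Z0 ++ Y)) /\
    (forall Y, fill (down c) Y ~~ fill (down cR) (strip Z0 ++ Y)).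
Proof.
  intros H1 H2; split; intros Y.
  - eapply eqv_trans; [apply ceq_fill; [apply H1|apply eqv_refl]|].
    eapply eqv_trans; [|apply ceq_fill; [apply ceq_sym, H2|apply eqv_refl]].
    rewrite !fill_ccomp_Hole. apply fill_eqv. eqv_solve.
  - eapply eqv_trans; [apply ceq_fill; [apply ceq_down, H1|apply eqv_refl]|].
    eapply eqv_trans; [|apply ceq_fill; [apply ceq_sym, ceq_down, H2|apply eqv_refl]].
    rewrite !down_ccomp, !fill_ccomp. simpl. apply fill_eqv. rewrite strip_app. eqv_solve.
Qed.

Lemma unstrip_fill d : forall s X, strip s ~~ fill d X ->
  exists c X', s ~~ fill c X' /\ ceq (down c) d /\ strip X' ~~ X.
Proof.
  induction d as [D|D p d0 IH]; intros s X H; simpl in H.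
  - destruct (strip_split _ _ _ H) as [s1 [s2 [H1 [H2 H3]]]].
    exists (Hole s1), s2; simpl; auto.
  - destruct (strip_split _ _ _ H) as [s1 [s2 [H1 [H2 H3]]]].
    destruct (strip_single_comp _ _ _ H3) as [u [O [H4 [H5 H6]]]].
    destruct (IH _ _ H6) as [c0 [X' [H7 [H8 H9]]]].
    exists (Down (s1 ++ O) p c0), X'; simpl; repeat split; auto using ceq_refl.
    + eapply eqv_trans; [apply H1|]. eapply eqv_trans; [apply eqv_app_r, H4|].
      eapply eqv_trans; [apply eqv_app_r, eqv_cons; [apply ie_comp, H7|apply eqv_refl]|]. eqv_solve.
    + rewrite strip_app, H5, app_nil_r; auto.
Qed.

Lemma unstrip_ccomp d1 : forall d2 c, ceq (down c) (ccomp d1 d2) ->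
  exists c1 c2, ceq c (ccomp c1 c2) /\ ceq (down c1) d1 /\ ceq (down c2) d2.
Proof.
  induction d1 as [D1|D1 p d1' IH]; intros d2 c H.
  - destruct d2 as [D2|D2 p d3]; destruct c as [Dc|Dc q c0]; simpl in H; try contradiction.
    + destruct (strip_split _ _ _ H) as [s1 [s2 [H1 [H2 H3]]]].
      exists (Hole s1), (Hole s2); simpl; repeat split; auto using ceq_refl.
    + destruct H as [H [-> H']].
      destruct (strip_split _ _ _ H) as [s1 [s2 [H1 [H2 H3]]]].
      exists (Hole s1), (Down s2 p c0); simpl; repeat split; auto using ceq_refl.
  - destruct c as [Dc|Dc q c0]; simpl in H; try contradiction.
    destruct H as [H [-> H']]. destruct (IH _ _ H') as [c1 [c2 [H1 [H2 H3]]]].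
    exists (Down Dc p c1), c2; simpl; repeat split; auto using ceq_refl.
Qed.

(* Two-hole contexts, classified by the relative position of the holes: both
   at top level (KN), the first at top level and the second inside a component
   (KL) or conversely (KR), in two sibling components (KS), or both below one
   component (KD).  [plug1 K A] fills the first hole, [plug2 K B] the second. *)
Inductive ctx2 : Type :=
| KN : seqnt -> ctx2
| KL : seqnt -> form -> ctx -> ctx2
| KR : seqnt -> form -> ctx -> ctx2
| KS : seqnt -> form -> ctx -> form -> ctx -> ctx2
| KD : seqnt -> form -> ctx2 -> ctx2.

Fixpoint plug1 (K : ctx2) (A : seqnt) : ctx :=
  match K with
  | KN D => Hole (D ++ A)
  | KL D p c => Down (D ++ A) p c
  | KR D p c => Hole (D ++ [IComp p (fill c A)])
  | KS D p1 c1 p2 c2 => Down (D ++ [IComp p1 (fill c1 A)]) p2 c2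
  | KD D p K' => Down D p (plug1 K' A)
  end.

Fixpoint plug2 (K : ctx2) (B : seqnt) : ctx :=
  match K with
  | KN D => Hole (D ++ B)
  | KL D p c => Hole (D ++ [IComp p (fill c B)])
  | KR D p c => Down (D ++ B) p c
  | KS D p1 c1 p2 c2 => Down (D ++ [IComp p2 (fill c2 B)]) p1 c1
  | KD D p K' => Down D p (plug2 K' B)
  end.

Fixpoint down2 (K : ctx2) : ctx2 :=
  match K with
  | KN D => KN (strip D)
  | KL D p c => KL (strip D) p (down c)
  | KR D p c => KR (strip D) p (down c)
  | KS D p1 c1 p2 c2 => KS (strip D) p1 (down c1) p2 (down c2)
  | KD D p K' => KD (strip D) p (down2 K')
  end.

Fixpoint nouts_ctx2 (K : ctx2) : nat :=
  match K with
  | KN D => nouts D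
  | KL D p c => nouts D + nouts_ctx c
  | KR D p c => nouts D + nouts_ctx c
  | KS D p1 c1 p2 c2 => nouts D + nouts_ctx c1 + nouts_ctx c2
  | KD D p K' => nouts D + nouts_ctx2 K'
  end.

Lemma fill_plug12 K A B : fill (plug1 K A) B ~~ fill (plug2 K B) A.
Proof.
  induction K; simpl; rewrite <- ?app_assoc; apply eqv_app_r; try eqv_solve.
  apply eqv_single_comp; auto.
Qed.

Lemma fill_plug21 K A B : fill (plug2 K B) A ~~ fill (plug1 K A) B.
Proof. apply eqv_sym, fill_plug12. Qed.

Lemma down_plug1 K A : down (plug1 K A) = plug1 (down2 K) (strip A).
Proof. induction K; simpl; strip_simpl; rewrite ?IHK; auto. Qed.

Lemma down_plug2 K B : down (plug2 K B) = plug2 (down2 K) (strip B).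
Proof. induction K; simpl; strip_simpl; rewrite ?IHK; auto. Qed.

Lemma nouts_ctx_plug2 K B : nouts_ctx (plug2 K B) = nouts_ctx2 K + nouts B.
Proof. induction K; simpl; nouts_simpl; rewrite ?IHK; lia. Qed.

Fixpoint ceq2 (K1 K2 : ctx2) : Prop :=
  match K1, K2 with
  | KN D1, KN D2 => D1 ~~ D2
  | KL D1 p1 c1, KL D2 p2 c2 => D1 ~~ D2 /\ p1 = p2 /\ ceq c1 c2
  | KR D1 p1 c1, KR D2 p2 c2 => D1 ~~ D2 /\ p1 = p2 /\ ceq c1 c2
  | KS D1 p1 c1 q1 d1, KS D2 p2 c2 q2 d2 => D1 ~~ D2 /\ p1 = p2 /\ ceq c1 c2 /\ q1 = q2 /\ ceq d1 d2
  | KD D1 p1 K1', KD D2 p2 K2' => D1 ~~ D2 /\ p1 = p2 /\ ceq2 K1' K2'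
  | _, _ => False
  end.

Lemma ceq2_refl K : ceq2 K K.
Proof. induction K; simpl; auto using ceq_refl. Qed.

Lemma ceq2_sym K1 K2 : ceq2 K1 K2 -> ceq2 K2 K1.
Proof. revert K2; induction K1; destruct K2; simpl; intuition; subst; auto using eqv_sym, ceq_sym. Qed.

Lemma ceq2_plug1 K1 K2 A1 A2 : ceq2 K1 K2 -> A1 ~~ A2 -> ceq (plug1 K1 A1) (plug1 K2 A2).
Proof.
  revert K2; induction K1; destruct K2; simpl; intuition; subst; auto using eqv_app;
  apply eqv_app; auto; apply eqv_single_comp; apply ceq_fill; auto.
Qed.

Lemma ceq2_plug2 K1 K2 A1 A2 : ceq2 K1 K2 -> A1 ~~ A2 -> ceq (plug2 K1 A1) (plug2 K2 A2).
Proof.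
  revert K2; induction K1; destruct K2; simpl; intuition; subst; auto using eqv_app;
  apply eqv_app; auto; apply eqv_single_comp; apply ceq_fill; auto.
Qed.

Lemma down2_down2 K : down2 (down2 K) = down2 K.
Proof. induction K; simpl; rewrite ?strip_strip, ?down_down, ?IHK; auto. Qed.

Lemma down2_nouts_ctx0 K : nouts_ctx2 K = 0 -> ceq2 (down2 K) K.
Proof.
  induction K; simpl; intros H; rewrite ?strip_nouts0 by lia; repeat split; auto;
  try apply down_nouts_ctx0; try apply IHK; try lia.
Qed.

Lemma unstrip_plug2 K : forall c Z, ceq (down c) (plug2 K Z) ->
  exists K' Z', ceq c (plug2 K' Z') /\ ceq2 (down2 K') K /\ strip Z' ~~ Z.
Proof.
  induction K as [D|D p c0|D p c0|D p1 c1 p2 c2|D p K0 IH]; intros c Z H;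
    destruct c as [Dc|Dc q c']; simpl in H; try contradiction.
  - destruct (strip_split _ _ _ H) as [s1 [s2 [H1 [H2 H3]]]].
    exists (KN s1), s2; simpl; repeat split; auto using ceq_refl.
  - destruct (strip_split _ _ _ H) as [s1 [s2 [H1 [H2 H3]]]].
    destruct (strip_single_comp _ _ _ H3) as [u [O [H4 [H5 H6]]]].
    destruct (unstrip_fill _ _ _ H6) as [c0' [Z' [H7 [H8 H9]]]].
    exists (KL (s1 ++ O) p c0'), Z'; simpl; repeat split; auto using ceq_refl.
    + eapply eqv_trans; [apply H1|]. eapply eqv_trans; [apply eqv_app_r, H4|].
      eapply eqv_trans; [apply eqv_app_r, eqv_cons; [apply ie_comp, H7|apply eqv_refl]|]. eqv_solve.
    + rewrite strip_app, H5, app_nil_r; auto.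
  - destruct H as [H [-> H']].
    destruct (strip_split _ _ _ H) as [s1 [s2 [H1 [H2 H3]]]].
    exists (KR s1 p c'), s2; simpl; repeat split; auto using ceq_refl.
  - destruct H as [H [-> H']].
    destruct (strip_split _ _ _ H) as [s1 [s2 [H1 [H2 H3]]]].
    destruct (strip_single_comp _ _ _ H3) as [u [O [H4 [H5 H6]]]].
    destruct (unstrip_fill _ _ _ H6) as [c2' [Z' [H7 [H8 H9]]]].
    exists (KS (s1 ++ O) p1 c' p2 c2'), Z'; simpl; repeat split; auto using ceq_refl.
    + eapply eqv_trans; [apply H1|]. eapply eqv_trans; [apply eqv_app_r, H4|].
      eapply eqv_trans; [apply eqv_app_r, eqv_cons; [apply ie_comp, H7|apply eqv_refl]|]. eqv_solve.
    + rewrite strip_app, H5, app_nil_r; auto.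
  - destruct H as [H [-> H']]. destruct (IH _ _ H') as [K' [Z' [H1 [H2 H3]]]].
    exists (KD Dc p K'), Z'; simpl; repeat split; auto using ceq_refl.
Qed.

(* The ways [fill c X] and [fill c' Z] can be two readings of one sequent: the
   holes are disjoint, one hole lies inside a component of what fills the
   other, or X and Z share the nonempty part M. *)
Inductive overlap (c : ctx) (X : seqnt) (c' : ctx) (Z : seqnt) : Prop :=
| ov_disjoint K : ceq c (plug2 K Z) -> ceq c' (plug1 K X) -> overlap c X c' Z
| ov_in_right Z1 e u Z2 c3 : Z = Z1 ++ IComp e u :: Z2 -> u ~~ fill c3 X ->
    ceq c (ccomp c' (Down (Z1 ++ Z2) e c3)) -> overlap c X c' Z
| ov_in_left X1 e u X2 c3 : X = X1 ++ IComp e u :: X2 -> u ~~ fill c3 Z ->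
    ceq c' (ccomp c (Down (X1 ++ X2) e c3)) -> overlap c X c' Z
| ov_shared a M X0 Z0 E : M <> [] -> X ~~ M ++ X0 -> Z ~~ M ++ Z0 ->
    ceq c (ccomp a (Hole (Z0 ++ E))) -> ceq c' (ccomp a (Hole (X0 ++ E))) -> overlap c X c' Z.

Lemma overlap_hole_hole D X D' Z : D ++ X ~~ D' ++ Z -> overlap (Hole D) X (Hole D') Z.
Proof.
  intros H.
  assert (H' : X ++ D ~~ Z ++ D').
  { eapply eqv_trans; [apply eqv_app_comm|]. eapply eqv_trans; [apply H| apply eqv_app_comm]. }
  apply eqv_app_cross in H' as [A1 [A2 [B1 [B2 [HX [HD [HZ HD']]]]]]].
  destruct A1 as [|a A1].
  - apply ov_disjoint with (KN B2); simpl.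
    + eapply eqv_trans; [apply HD|]. eapply eqv_trans; [apply eqv_app_comm|].
      apply eqv_app_r, eqv_sym; auto.
    + eapply eqv_trans; [apply HD'|]. eapply eqv_trans; [apply eqv_app_comm|].
      apply eqv_app_r, eqv_sym; auto.
  - apply ov_shared with (Hole []) (a :: A1) A2 B1 B2; simpl; auto. discriminate.
Qed.

Lemma overlap_hole_down D X D' p' c0' Z :
  D ++ X ~~ D' ++ [IComp p' (fill c0' Z)] -> overlap (Hole D) X (Down D' p' c0') Z.
Proof.
  intros H.
  assert (H' : IComp p' (fill c0' Z) :: D' ~~ D ++ X) by (eapply eqv_trans; [|apply eqv_sym, H]; eqv_solve).
  apply eqv_cons_app in H' as [[D1 [y [D2 [-> [Hy HD']]]]]|[X1 [y [X2 [-> [Hy HD']]]]]].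
  - apply ov_disjoint with (KL (D1 ++ D2) p' c0'); simpl.
    + eapply eqv_trans; [apply eqv_mid, ie_sym, Hy|]. eqv_solve.
    + repeat split; auto using ceq_refl. rewrite <- app_assoc; auto.
  - apply ie_comp_inv in Hy as [u [-> Hu]].
    apply ov_in_left with X1 p' u X2 c0'; simpl; repeat split; auto using eqv_sym, ceq_refl.
Qed.

Lemma overlap_down_hole D p c0 X D' Z :
  D ++ [IComp p (fill c0 X)] ~~ D' ++ Z -> overlap (Down D p c0) X (Hole D') Z.
Proof.
  intros H.
  assert (H' : IComp p (fill c0 X) :: D ~~ D' ++ Z) by (eapply eqv_trans; [|apply H]; eqv_solve).
  apply eqv_cons_app in H' as [[D1 [y [D2 [-> [Hy HD']]]]]|[Z1 [y [Z2 [-> [Hy HD']]]]]].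
  - apply ov_disjoint with (KR (D1 ++ D2) p c0); simpl.
    + repeat split; auto using ceq_refl. rewrite <- app_assoc; auto.
    + eapply eqv_trans; [apply eqv_mid, ie_sym, Hy|]. eqv_solve.
  - apply ie_comp_inv in Hy as [u [-> Hu]].
    apply ov_in_right with Z1 p u Z2 c0; simpl; repeat split; auto using eqv_sym, ceq_refl.
Qed.

Lemma fill_eqv_overlap c X c' Z : fill c X ~~ fill c' Z -> overlap c X c' Z.
Proof.
  revert c'; induction c as [D|D p c0 IH]; intros [D'|D' p' c0'] H; simpl in H;
    auto using overlap_hole_hole, overlap_hole_down, overlap_down_hole.
  assert (H' : IComp p (fill c0 X) :: D ~~ D' ++ [IComp p' (fill c0' Z)])
    by (eapply eqv_trans; [|apply H]; eqv_solve).
  apply eqv_cons_app in H' as [[D1 [y [D2 [-> [Hy HD']]]]]|[B1 [y [B2 [HB [Hy HD']]]]]].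
  - assert (H2 : IComp p' (fill c0' Z) :: (D1 ++ D2) ~~ D)
      by (eapply eqv_trans; [|apply eqv_sym, HD']; eqv_solve).
    apply eqv_cons_inv in H2 as [E1 [z [E2 [-> [Hz HE]]]]].
    apply ov_disjoint with (KS (E1 ++ E2) p c0 p' c0'); simpl; repeat split; auto using ceq_refl.
    + eapply eqv_trans; [apply eqv_mid, ie_sym, Hz|]. eqv_solve.
    + eapply eqv_trans; [apply eqv_mid, ie_sym, Hy|].
      eapply eqv_trans; [|apply eqv_app; [apply HE|apply eqv_refl]]. eqv_solve.
  - destruct B1 as [|b [|]]; simpl in HB; inversion HB; subst. rewrite app_nil_r in HD'.
    apply ie_comp_comp_inv in Hy as [<- Hc].
    destruct (IH c0' Hc)
      as [K H1 H2|Z1 e u Z2 c3 H1 H2 H3|X1 e u X2 c3 H1 H2 H3|a M X0 Z0 E H1 H2 H3 H4 H5].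
    + apply ov_disjoint with (KD D p K); simpl; repeat split; auto using eqv_sym.
    + apply ov_in_right with Z1 e u Z2 c3; simpl; repeat split; auto using eqv_sym.
    + apply ov_in_left with X1 e u X2 c3; simpl; repeat split; auto using eqv_sym.
    + apply ov_shared with (Down D p a) M X0 Z0 E; simpl; repeat split; auto using eqv_sym.
Qed.

(** * The cut-free calculus with derivation heights *)

(* A rule instance is a schema [schema T Z] used in a context c: its conclusion
   is [fill c Z], and its premisses are [fill c Z'] for [PCtx Z'],
   [fill (down c) Z'] for [PDown Z'], and the context-free side premisses s of
   the modal rules for [PFixed s]. *)
Inductive premiss : Type := PCtx (Z : seqnt) | PDown (Z : seqnt) | PFixed (s : seqnt).

Definition premiss_at (c : ctx) (t : premiss) : seqnt :=
  match t with PCtx Z => fill c Z | PDown Z => fill (down c) Z | PFixed s => s end.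

Inductive schema : list premiss -> seqnt -> Prop :=
| s_init p : schema [] [IIn (Var p); IOut (Var p)]
| s_bot : schema [] [IIn Bot]
| s_andL f g : schema [PCtx [IIn f; IIn g]] [IIn (And f g)]
| s_andR f g : schema [PCtx [IOut f]; PCtx [IOut g]] [IOut (And f g)]
| s_orL f g : schema [PCtx [IIn f]; PCtx [IIn g]] [IIn (Or f g)]
| s_orR1 f g : schema [PCtx [IOut f]] [IOut (Or f g)]
| s_orR2 f g : schema [PCtx [IOut g]] [IOut (Or f g)]
| s_impL f g : schema [PDown [IIn (Imp f g); IOut f]; PCtx [IIn g]] [IIn (Imp f g)]
| s_impR f g : schema [PCtx [IIn f; IOut g]] [IOut (Imp f g)]
| s_boxL f g e D : schema [PFixed [IIn f; IOut e]; PFixed [IIn e; IOut f];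
                          PCtx [IIn (Box f g); IComp e (IIn g :: D)]] [IIn (Box f g); IComp e D]
| s_boxR f g : schema [PCtx [IComp f [IOut g]]] [IOut (Box f g)]
| s_diaL f g : schema [PCtx [IComp f [IIn g]]] [IIn (Dia f g)]
| s_diaR f g e D : schema [PFixed [IIn f; IOut e]; PFixed [IIn e; IOut f];
                          PCtx [IComp e (IOut g :: D)]] [IOut (Dia f g); IComp e D].

(* Sequents with any number of outputs are derived here; nestedness is only
   recovered in [hder_derivable]. *)
Inductive hder : nat -> seqnt -> Prop :=
| hder_rule n c T Z s : schema T Z -> fill c Z ~~ s -> (forall t, In t T -> hder n (premiss_at c t)) ->
  hder (S n) s.

Definition cfder s := exists n, hder n s.

Lemma hder_eqv n s s' : hder n s -> s ~~ s' -> hder n s'.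
Proof. intros H; inversion H; subst; intros; econstructor; eauto using eqv_trans. Qed.

Lemma cfder_eqv s s' : cfder s -> s ~~ s' -> cfder s'.
Proof. intros [n H] E; exists n; eauto using hder_eqv. Qed.

Lemma hder_mono n s : hder n s -> forall m, n <= m -> hder m s.
Proof.
  induction 1; intros m Hm. destruct m; [lia|].
  econstructor; eauto. intros t Ht. apply H2; auto; lia.
Qed.

Lemma hder_S n s : hder n s -> hder (S n) s.
Proof. intros; eapply hder_mono; eauto. Qed.

Lemma hder_cfder n s : hder n s -> cfder s. Proof. exists n; auto. Qed.

Lemma hder_schema n c T Z :
  schema T Z -> (forall t, In t T -> hder n (premiss_at c t)) -> hder (S n) (fill c Z).
Proof. intros; econstructor; eauto. Qed.

Lemma cfder_rule c T Z : schema T Z -> (forall t, In t T -> cfder (premiss_at c t)) -> cfder (fill c Z).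
Proof.
  intros HR HT.
  assert (Hm : exists m, forall t, In t T -> hder m (premiss_at c t)).
  { clear HR. induction T as [|t T IH].
    - exists 0; intros t [].
    - destruct (HT t (or_introl eq_refl)) as [n1 H1].
      destruct IH as [n2 H2]; [intros; apply HT; right; auto|].
      exists (max n1 n2). intros t' [<-|Ht']; eapply hder_mono; eauto; lia. }
  destruct Hm as [m Hm]. exists (S m). econstructor; eauto.
Qed.

Lemma premiss_at_ceq c1 c2 t : ceq c1 c2 -> premiss_at c1 t ~~ premiss_at c2 t.
Proof. destruct t; simpl; intros; auto using ceq_fill, ceq_down. Qed.

Lemma schema_comp_inv T Z1 h u Z2 : schema T (Z1 ++ IComp h u :: Z2) ->
  exists g0 W w, Z2 = [] /\ strip W = strip Z1 /\
    T = [PFixed [IIn g0; IOut h]; PFixed [IIn h; IOut g0]; PCtx (W ++ [IComp h (w :: u)])] /\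
    forall e u', schema [PFixed [IIn g0; IOut e]; PFixed [IIn e; IOut g0]; PCtx (W ++ [IComp e (w :: u')])]
                        (Z1 ++ [IComp e u']).
Proof.
  intros H; inversion H; subst;
  repeat match goal with
  | H : _ = _ ++ _ :: _ |- _ => symmetry in H
  | H : ?Z1 ++ _ :: _ = _ |- _ => destruct Z1 as [|? Z1]; simpl in H; inversion H; subst; clear H
  end; try discriminate;
  try (match goal with H : [] = _ ++ _ :: _ |- _ => apply app_cons_not_nil in H; contradiction end).
  - eexists _, [IIn (Box _ _)], _; repeat split. intros; simpl; constructor.
  - eexists _, [], _; repeat split. intros; simpl; constructor.
Qed.

Lemma schema_comp_cases T n1 p w n2 : schema T (n1 ++ IComp p w :: n2) ->
  exists y0, n1 = [y0] /\ n2 = [] /\ (forall q v, item_equiv y0 (IComp q v) -> False) /\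
   ((exists g0 g, y0 = IIn (Box g0 g) /\
       T = [PFixed [IIn g0; IOut p]; PFixed [IIn p; IOut g0]; PCtx [IIn (Box g0 g); IComp p (IIn g :: w)]]) \/
    (exists g0 g, y0 = IOut (Dia g0 g) /\
       T = [PFixed [IIn g0; IOut p]; PFixed [IIn p; IOut g0]; PCtx [IComp p (IOut g :: w)]])).
Proof.
  intros HL. inversion HL; subst;
  match goal with H : _ = n1 ++ _ :: n2 |- _ => rename H into E2 end;
  destruct n1 as [|? [|? []]]; simpl in E2; inversion E2; subst; clear E2.
  - eexists; repeat split; [intros q v Hq; inversion Hq|]. left; eauto.
  - eexists; repeat split; [intros q v Hq; inversion Hq|]. right; eauto.
Qed.

Lemma principal_out_shape T Z xi Z0 : schema T Z -> Z ~~ IOut xi :: Z0 ->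
  match xi with
  | Var p => T = [] /\ Z0 ~~ [IIn (Var p)]
  | Bot => False
  | And f g => T = [PCtx [IOut f]; PCtx [IOut g]] /\ Z0 = []
  | Or f g => (T = [PCtx [IOut f]] \/ T = [PCtx [IOut g]]) /\ Z0 = []
  | Imp f g => T = [PCtx [IIn f; IOut g]] /\ Z0 = []
  | Box f g => T = [PCtx [IComp f [IOut g]]] /\ Z0 = []
  | Dia f g => exists e D,
      T = [PFixed [IIn f; IOut e]; PFixed [IIn e; IOut f]; PCtx [IComp e (IOut g :: D)]] /\ Z0 ~~ [IComp e D]
  end.
Proof.
  intros HL H. apply eqv_sym, eqv_cons_inv in H as [Z1 [y [Z2 [E [Hy HZ]]]]].
  apply ie_out_inv in Hy; subst y.
  subst Z. inversion HL; subst;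
  match goal with H : _ = Z1 ++ _ :: Z2 |- _ => rename H into E end;
  destruct Z1 as [|? [|? [|]]]; simpl in E; inversion E; subst; simpl in *;
  try (apply eqv_nil_r in HZ; subst); repeat split; auto; eauto.
Qed.

Lemma principal_in_shape T Z xi Z0 : schema T Z -> Z ~~ IIn xi :: Z0 ->
  match xi with
  | Var p => T = [] /\ Z0 ~~ [IOut (Var p)]
  | Bot => T = [] /\ Z0 = []
  | And f g => T = [PCtx [IIn f; IIn g]] /\ Z0 = []
  | Or f g => T = [PCtx [IIn f]; PCtx [IIn g]] /\ Z0 = []
  | Imp f g => T = [PDown [IIn (Imp f g); IOut f]; PCtx [IIn g]] /\ Z0 = []
  | Box f g => exists e D,
      T = [PFixed [IIn f; IOut e]; PFixed [IIn e; IOut f]; PCtx [IIn (Box f g); IComp e (IIn g :: D)]] /\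
      Z0 ~~ [IComp e D]
  | Dia f g => T = [PCtx [IComp f [IIn g]]] /\ Z0 = []
  end.
Proof.
  intros HL H. apply eqv_sym, eqv_cons_inv in H as [Z1 [y [Z2 [E [Hy HZ]]]]].
  apply ie_in_inv in Hy; subst y.
  subst Z. inversion HL; subst;
  match goal with H : _ = Z1 ++ _ :: Z2 |- _ => rename H into E end;
  destruct Z1 as [|? [|? [|]]]; simpl in E; inversion E; subst; simpl in *;
  try (apply eqv_nil_r in HZ; subst); repeat split; auto; eauto.
Qed.

(** * Height-preserving admissible rules *)

Definition adm_into (n : nat) (R : seqnt -> seqnt -> Prop) (Q : seqnt -> Prop) :=
  forall c X Y, R X Y -> hder n (fill c X) -> Q (fill c Y).

Definition hp_adm (n : nat) (R : seqnt -> seqnt -> Prop) := adm_into n R (hder n).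

Section ReplaceInPremisses.
Variables (n : nat) (R : seqnt -> seqnt -> Prop) (Q : seqnt -> Prop).
Hypothesis Q_eqv : forall s s', Q s -> s ~~ s' -> Q s'.
Hypothesis Q_hder : forall s, hder n s -> Q s.
Hypothesis R_adm : adm_into n R Q.

Lemma premisses_replace_disjoint T c' K X Y :
  (forall X Y, R X Y -> R (strip X) (strip Y)) -> R X Y -> ceq c' (plug1 K X) ->
  (forall t, In t T -> hder n (premiss_at c' t)) ->
  forall t, In t T -> Q (premiss_at (plug1 K Y) t).
Proof.
  intros HS HR Hc HT t Ht.
  assert (HX : hder n (premiss_at (plug1 K X) t))
    by (eapply hder_eqv; [apply (HT t Ht)| apply premiss_at_ceq, Hc]).
  destruct t as [Zp|Zp|s]; simpl in *.
  - apply Q_eqv with (fill (plug2 K Zp) Y); [|apply eqv_sym, fill_plug12].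
    apply R_adm with X; auto. eapply hder_eqv; [apply HX|apply fill_plug12].
  - rewrite down_plug1 in *.
    apply Q_eqv with (fill (plug2 (down2 K) Zp) (strip Y)); [|apply eqv_sym, fill_plug12].
    apply R_adm with (strip X); auto. eapply hder_eqv; [apply HX|apply fill_plug12].
  - auto.
Qed.

Lemma premisses_replace_in_comp T c' Z1 e u Z2 c3 X Y :
  R X Y -> schema T (Z1 ++ IComp e u :: Z2) -> u ~~ fill c3 X ->
  (forall t, In t T -> hder n (premiss_at c' t)) ->
  exists T', schema T' (Z1 ++ IComp e (fill c3 Y) :: Z2) /\
             forall t, In t T' -> Q (premiss_at c' t).
Proof.
  intros HR HL Hu HT.
  destruct (schema_comp_inv _ _ _ _ _ HL) as [g0 [W [w [-> [_ [-> Hr]]]]]].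
  eexists; split; [apply Hr|].
  intros t [<-|[<-|[<-|[]]]]; simpl.
  - apply Q_hder, (HT (PFixed _)); left; auto.
  - apply Q_hder, (HT (PFixed _)); right; left; auto.
  - assert (H3 := HT _ (or_intror (or_intror (or_introl eq_refl)))). simpl in H3.
    rewrite <- fill_ccomp_Down_cons. apply R_adm with X; auto. rewrite fill_ccomp_Down_cons.
    eapply hder_eqv; [apply H3|]. apply fill_eqv, eqv_app_r, eqv_single_comp. constructor; auto.
Qed.

End ReplaceInPremisses.

(* Induction on the height reduces the admissibility of a replacement to the
   cases where the last rule acts on the replaced part itself: if its active
   part is disjoint from X or encloses X, the replacement is pushed into the
   premisses. *)
Section AdmissibleByOverlap.
Variables (R : seqnt -> seqnt -> Prop) (Q : nat -> seqnt -> Prop).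
Hypothesis Q_eqv : forall n s s', Q n s -> s ~~ s' -> Q n s'.
Hypothesis Q_hder : forall n s, hder n s -> Q n s.
Hypothesis Q_rule : forall n c T Z,
  schema T Z -> (forall t, In t T -> Q n (premiss_at c t)) -> Q (S n) (fill c Z).
Hypothesis R_strip : forall X Y, R X Y -> R (strip X) (strip Y).
Hypothesis R_shared : forall n, adm_into n R (Q n) ->
  forall c X Y c' T Z, R X Y -> schema T Z -> (forall t, In t T -> hder n (premiss_at c' t)) ->
  forall a M X0 Z0 E, M <> [] -> X ~~ M ++ X0 -> Z ~~ M ++ Z0 ->
  ceq c (ccomp a (Hole (Z0 ++ E))) -> ceq c' (ccomp a (Hole (X0 ++ E))) -> Q (S n) (fill c Y).
Hypothesis R_rule_inside : forall n, adm_into n R (Q n) ->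
  forall c X Y c' T Z, R X Y -> schema T Z -> (forall t, In t T -> hder n (premiss_at c' t)) ->
  forall X1 e u X2 c3, X = X1 ++ IComp e u :: X2 -> u ~~ fill c3 Z ->
  ceq c' (ccomp c (Down (X1 ++ X2) e c3)) -> Q (S n) (fill c Y).

Lemma adm_by_overlap n : adm_into n R (Q n).
Proof.
  induction n as [|n IH]; intros c X Y HR HD; inversion HD as [? c' T Z s HL Hs HT]; subst.
  destruct (fill_eqv_overlap c X c' Z (eqv_sym _ _ Hs))
    as [K H1 H2|Z1 e u Z2 c3 H1 H2 H3|X1 e u X2 c3 H1 H2 H3|a M X0 Z0 E H1 H2 H3 H4 H5].
  - apply Q_eqv with (fill (plug1 K Y) Z).
    { apply (Q_rule _ _ T); [apply HL|]. eapply premisses_replace_disjoint; eauto. }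
    eapply eqv_trans; [apply fill_plug12|]. apply ceq_fill; [apply ceq_sym; auto|apply eqv_refl].
  - subst Z. destruct (premisses_replace_in_comp n R (Q n) (Q_hder n) IH _ c' _ _ _ _ _ X Y HR HL H2 HT)
      as [T' [HL' HT']].
    eapply Q_eqv; [apply (Q_rule _ c' T'); [apply HL'|apply HT']|].
    apply eqv_sym. eapply eqv_trans; [apply ceq_fill; [apply H3|apply eqv_refl]|].
    rewrite fill_ccomp. apply fill_eqv. simpl. eqv_solve.
  - eapply R_rule_inside; eauto.
  - eapply R_shared; eauto.
Qed.

End AdmissibleByOverlap.

(* Weakening is the replacement of the empty sequent. *)
Definition weak_step (X Y : seqnt) := X = [].

Lemma hp_weak_step n : hp_adm n weak_step.
Proof.
  apply (adm_by_overlap _ hder); [apply hder_eqv|auto|apply hder_schema| | |].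
  - unfold weak_step; intros; subst; reflexivity.
  - intros n' _ c X Y c' T Z HR _ _ a M X0 Z0 E HM H2. unfold weak_step in HR; subst.
    apply eqv_nil_l in H2. destruct M; [congruence|discriminate].
  - intros n' _ c X Y c' T Z HR _ _ X1 e u X2 c3 HX. unfold weak_step in HR; subst.
    destruct X1; discriminate.
Qed.

Lemma hder_weaken n c X W : hder n (fill c X) -> hder n (fill c (X ++ W)).
Proof.
  intros H. rewrite <- fill_ccomp_Hole. apply (hp_weak_step n) with []; [reflexivity|].
  rewrite fill_ccomp_Hole, app_nil_r; auto.
Qed.

Lemma hder_weaken_comp n c W h V D :
  hder n (fill c (W ++ [IComp h D])) -> hder n (fill c (W ++ [IComp h (V ++ D)])).
Proof.
  intros HD.
  assert (H0 : hder n (fill (ccomp c (Down W h (Hole D))) []))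
    by (rewrite fill_ccomp_Down; simpl; rewrite app_nil_r; auto).
  apply (hder_weaken _ _ [] V) in H0. rewrite fill_ccomp_Down in H0.
  eapply hder_eqv; [apply H0|]. apply fill_eqv, eqv_app_r, eqv_single_comp, eqv_app_comm.
Qed.

Inductive invertible : form -> seqnt -> Prop :=
| inv_and f g : invertible (And f g) [IIn f; IIn g]
| inv_or1 f g : invertible (Or f g) [IIn f]
| inv_or2 f g : invertible (Or f g) [IIn g]
| inv_imp f g : invertible (Imp f g) [IIn g]
| inv_dia f g : invertible (Dia f g) [IComp f [IIn g]].

Definition inv_step (X Y : seqnt) := exists phi, X = [IIn phi] /\ invertible phi Y.

Lemma inv_step_strip X Y : inv_step X Y -> inv_step (strip X) (strip Y).
Proof.
  intros [phi [-> H]]. exists phi; split; [reflexivity|].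
  inversion H; subst; strip_simpl; constructor.
Qed.

Ltac split_single H :=
  let Z1 := fresh "Z1" in let y := fresh "y" in let Z2 := fresh "Z2" in
  let E := fresh "E" in let Hy := fresh "Hy" in let HZ := fresh "HZ" in
  apply eqv_cons_inv in H as [Z1 [y [Z2 [E [Hy HZ]]]]];
  destruct Z1 as [|? [|? [|]]]; simpl in E; inversion E; subst; clear E.

Lemma hp_inv_step n : hp_adm n inv_step.
Proof.
  apply (adm_by_overlap _ hder); [apply hder_eqv|auto|apply hder_schema| | |].
  - apply inv_step_strip.
  - intros n' _ c X Y c' T Z HR HL HT a M X0 Z0 E HM H2 H3 H4 H5.
    destruct HR as [phi [-> HP]].
    destruct (eqv_single_app _ _ _ H2 HM) as [y [-> [-> Hy]]].
    apply ie_in_inv in Hy; subst.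
    destruct (fill_shared_hole _ _ _ _ _ _ Y H4 H5) as [F1 F2].
    assert (H3' : IIn phi :: Z0 ~~ Z) by (apply eqv_sym; auto).
    (* phi is principal, so the rule is the input rule for phi, whose
       conclusion is just phi and one of whose premisses is Y. *)
    inversion HL; subst; split_single H3'; try (apply ie_in_inv in Hy; discriminate);
      try (apply ie_out_inv in Hy; discriminate);
      try (apply ie_in_inv in Hy; inversion Hy; subst; inversion HP; fail);
      apply ie_in_inv in Hy; inversion Hy; subst; apply eqv_nil_r in HZ; subst;
      inversion HP; subst;
      match goal with |- hder _ (fill _ ?Y) =>
        apply hder_S; eapply hder_eqv; [apply (HT (PCtx Y)); simpl; auto|];
        simpl; eapply eqv_trans; [apply F2|]; eapply eqv_trans; [|apply eqv_sym, F1]; auto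
      end.
  - intros n' _ c X Y c' T Z HR _ _ X1 e u X2 c3 HX.
    destruct HR as [phi [-> _]]. destruct X1 as [|? [|]]; discriminate.
Qed.

Lemma hder_invert n c phi Y : invertible phi Y -> hder n (fill c [IIn phi]) -> hder n (fill c Y).
Proof. intros HP H. apply (hp_inv_step n) with [IIn phi]; auto. exists phi; auto. Qed.

Lemma hder_restore_app n : forall u c X, hder n (fill c (strip u ++ X)) -> hder n (fill c (u ++ X)).
Proof.
  apply (seqnt_nested_ind
           (fun i => forall c X, hder n (fill c (strip_item i ++ X)) -> hder n (fill c (i :: X)))
           (fun u => forall c X, hder n (fill c (strip u ++ X)) -> hder n (fill c (u ++ X)))); intros.
  - rewrite strip_item_in in H; auto.
  - rewrite strip_item_out in H; simpl in H.
    eapply hder_eqv; [apply hder_weaken with (W := [IOut f]); eauto|].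
    apply fill_eqv. eqv_solve.
  - rewrite strip_item_comp in H0. simpl in H0.
    set (d := ccomp c (Down X f (Hole []))).
    assert (E1 : forall V, fill d V ~~ fill c (IComp f V :: X)).
    { intros V; unfold d; rewrite fill_ccomp; simpl. apply fill_eqv. eqv_solve. }
    eapply hder_eqv; [|apply E1]. rewrite <- (app_nil_r u). apply H.
    eapply hder_eqv; [apply H0|]. apply eqv_sym. rewrite app_nil_r. apply E1.
  - auto.
  - rewrite strip_cons, <- app_assoc in H1. apply H in H1.
    assert (E1 : forall V, fill (ccomp c (Hole [i])) V = fill c (i :: V))
      by (intros; rewrite fill_ccomp; reflexivity).
    rewrite <- E1 in *. simpl. rewrite <- E1. apply H0. auto.
Qed.

Lemma hder_restore_in n c : forall e X, hder n (fill e (fill (down c) X)) -> hder n (fill e (fill c X)).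
Proof.
  induction c as [D|D p c IH]; intros e X H; simpl in *.
  - apply (hder_restore_app n D e X); auto.
  - apply hder_restore_app in H.
    change (fill e (D ++ [IComp p (fill c X)])) with (fill e (D ++ [IComp p (fill (Hole []) (fill c X))])).
    rewrite <- fill_ccomp_Down. apply IH. rewrite fill_ccomp_Down. auto.
Qed.

Lemma hder_restore n c X : hder n (fill (down c) X) -> hder n (fill c X).
Proof. intros H. apply (hder_restore_in n c (Hole [])). simpl. auto. Qed.

(** * Merging interderivable components *)

Definition cut_admissible (xi : form) := forall c, cfder (fill (down c) [IOut xi]) ->
  cfder (fill c [IIn xi]) -> cfder (fill c []).

Lemma cfder_weaken c X W : cfder (fill c X) -> cfder (fill c (X ++ W)).
Proof. intros [n H]; exists n; apply hder_weaken; auto. Qed.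

Lemma cfder_chain f g h : cut_admissible f ->
  cfder [IIn g; IOut f] -> cfder [IIn f; IOut h] -> cfder [IIn g; IOut h].
Proof.
  intros HC H1 H2. apply cfder_eqv with (fill (Hole [IIn g; IOut h]) []); [|simpl; auto].
  apply HC; simpl; strip_simpl.
  - auto.
  - apply cfder_eqv with (fill (Hole []) ([IIn f; IOut h] ++ [IIn g])); [apply cfder_weaken; auto|].
    simpl; eqv_solve.
Qed.

Lemma two_comp_overlap f A e B M X0 Z Z0 T : M <> [] -> [IComp f A; IComp e B] ~~ M ++ X0 ->
  Z ~~ M ++ Z0 -> schema T Z ->
  exists h D other y0, Z = [y0; IComp h D] /\
    ((h = f /\ D ~~ A /\ other = IComp e B) \/ (h = e /\ D ~~ B /\ other = IComp f A)) /\
    X0 ~~ [other] /\ Z0 ~~ [y0].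
Proof.
  intros HM H2 H3 HL. destruct M as [|m M']; [congruence|]. simpl in *.
  assert (H2' := eqv_sym _ _ H2). apply eqv_cons_inv in H2' as [m1 [y [m2 [E1 [Hy HR]]]]].
  assert (Hcase : (item_equiv m (IComp f A) /\ M' ++ X0 ~~ [IComp e B]) \/
                  (item_equiv m (IComp e B) /\ M' ++ X0 ~~ [IComp f A])).
  { destruct m1 as [|? [|? []]]; simpl in E1; inversion E1; subst; auto. }
  clear E1 Hy HR m1 m2 y.
  assert (Hmc : exists p w, m = IComp p w).
  { destruct Hcase as [[Hm _]|[Hm _]]; apply ie_sym in Hm; inversion Hm; subst; eauto. }
  destruct Hmc as [p [w ->]].
  assert (H3' := eqv_sym _ _ H3). apply eqv_cons_inv in H3' as [n1 [z [n2 [E2 [Hz HR2]]]]].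
  apply ie_comp_inv in Hz as [w' [-> Hw']]. subst Z.
  destruct (schema_comp_cases _ _ _ _ _ HL) as [y0 [-> [-> [Hy0 _]]]].
  simpl in HR2.
  destruct M' as [|m' M''].
  2:{ exfalso. simpl in HR2. apply eqv_cons_inv in HR2 as [k1 [k [k2 [E3 [Hk _]]]]].
      destruct k1 as [|? []]; simpl in E3; inversion E3; subst.
      destruct Hcase as [[_ Hc]|[_ Hc]]; simpl in Hc; apply eqv_cons_single in Hc as [_ Hc];
      apply ie_sym in Hc; inversion Hc; subst; eapply Hy0, ie_sym; eauto. }
  simpl in *.
  destruct Hcase as [[Hm Hc]|[Hm Hc]]; apply ie_comp_comp_inv in Hm as [<- Hm].
  - exists p, w', (IComp e B), y0; split; [reflexivity|].
    split; [left; repeat split; eauto using eqv_trans, eqv_sym|]. split; auto; apply eqv_sym; auto.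
  - exists p, w', (IComp f A), y0; split; [reflexivity|].
    split; [right; repeat split; eauto using eqv_trans, eqv_sym|]. split; auto; apply eqv_sym; auto.
Qed.

Definition merge_step f e (X Y : seqnt) :=
  exists A B, X = [IComp f A; IComp e B] /\ Y = [IComp e (A ++ B)].

Lemma merge_step_strip f e X Y : merge_step f e X Y -> merge_step f e (strip X) (strip Y).
Proof. intros [A [B [-> ->]]]. exists (strip A), (strip B). strip_simpl. auto. Qed.

(* In a principal modal cut one of the two rules works on a component [e : B]
   and the other one produces [f : A], where f and e are only known to be
   interderivable. *)
Section MergeComponents.
Variables f e : form.
Hypothesis cut_f : cut_admissible f.
Hypothesis der_fe : cfder [IIn f; IOut e].
Hypothesis der_ef : cfder [IIn e; IOut f].

Lemma merge_side_premisses h g0 : h = f \/ h = e ->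
  cfder [IIn g0; IOut h] -> cfder [IIn h; IOut g0] -> cfder [IIn g0; IOut e] /\ cfder [IIn e; IOut g0].
Proof. intros [-> | ->] H1 H2; split; auto; eapply cfder_chain; eauto. Qed.

Lemma merge_rule_in_first n c c' T Z A B c3 : adm_into n (merge_step f e) cfder ->
  schema T Z -> (forall t, In t T -> hder n (premiss_at c' t)) ->
  A ~~ fill c3 Z -> ceq c' (ccomp c (Down [IComp e B] f c3)) -> cfder (fill c [IComp e (A ++ B)]).
Proof.
  intros IH HL HT Hu H3.
  eapply cfder_eqv with (s := fill (ccomp c (Down [] e (ccomp (Hole B) c3))) Z).
  2:{ rewrite fill_ccomp_Down_app. apply fill_eqv, eqv_single_comp.
      eapply eqv_trans; [apply eqv_app_comm|]. apply eqv_app; auto using eqv_sym. }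
  apply (cfder_rule _ T); auto. intros t Ht. assert (HTt := HT t Ht).
  destruct t as [Zp|Zp|s0]; unfold premiss_at in *.
  - rewrite fill_ccomp_Down_app.
    eapply cfder_eqv;
      [apply (IH c [IComp f (fill c3 Zp); IComp e B]); [eexists _, _; split; reflexivity|]|].
    + eapply hder_eqv; [apply HTt|]. eapply eqv_trans; [apply ceq_fill; [apply H3|apply eqv_refl]|].
      rewrite fill_ccomp_Down. apply fill_eqv. eqv_solve.
    + apply fill_eqv, eqv_single_comp, eqv_app_comm.
  - rewrite fill_down_ccomp_Down_app.
    eapply cfder_eqv;
      [apply (IH (down c) [IComp f (fill (down c3) Zp); IComp e (strip B)]);
         [eexists _, _; split; reflexivity|]|].
    + eapply hder_eqv; [apply HTt|].
      eapply eqv_trans; [apply ceq_fill; [apply ceq_down, H3|apply eqv_refl]|].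
      rewrite fill_down_ccomp_Down. apply fill_eqv. strip_simpl. eqv_solve.
    + apply fill_eqv, eqv_single_comp, eqv_app_comm.
  - eapply hder_cfder; eauto.
Qed.

Lemma merge_rule_in_second n c c' T Z A B c3 : adm_into n (merge_step f e) cfder ->
  schema T Z -> (forall t, In t T -> hder n (premiss_at c' t)) ->
  B ~~ fill c3 Z -> ceq c' (ccomp c (Down [IComp f A] e c3)) -> cfder (fill c [IComp e (A ++ B)]).
Proof.
  intros IH HL HT Hu H3.
  eapply cfder_eqv with (s := fill (ccomp c (Down [] e (ccomp (Hole A) c3))) Z).
  2:{ rewrite fill_ccomp_Down_app. apply fill_eqv, eqv_single_comp. apply eqv_app; auto using eqv_sym. }
  apply (cfder_rule _ T); auto. intros t Ht. assert (HTt := HT t Ht).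
  destruct t as [Zp|Zp|s0]; unfold premiss_at in *.
  - rewrite fill_ccomp_Down_app.
    apply (IH c [IComp f A; IComp e (fill c3 Zp)]); [eexists _, _; split; reflexivity|].
    eapply hder_eqv; [apply HTt|]. eapply eqv_trans; [apply ceq_fill; [apply H3|apply eqv_refl]|].
    rewrite fill_ccomp_Down. apply fill_eqv. simpl. auto.
  - rewrite fill_down_ccomp_Down_app.
    apply (IH (down c) [IComp f (strip A); IComp e (fill (down c3) Zp)]);
      [eexists _, _; split; reflexivity|].
    eapply hder_eqv; [apply HTt|].
    eapply eqv_trans; [apply ceq_fill; [apply ceq_down, H3|apply eqv_refl]|].
    rewrite fill_down_ccomp_Down. apply fill_eqv. strip_simpl. auto.
  - eapply hder_cfder; eauto.
Qed.

Lemma merge_rule_inside n : adm_into n (merge_step f e) cfder ->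
  forall c X Y c' T Z, merge_step f e X Y -> schema T Z ->
  (forall t, In t T -> hder n (premiss_at c' t)) ->
  forall X1 h u X2 c3, X = X1 ++ IComp h u :: X2 -> u ~~ fill c3 Z ->
  ceq c' (ccomp c (Down (X1 ++ X2) h c3)) -> cfder (fill c Y).
Proof.
  intros IH c X Y c' T Z [A [B [-> ->]]] HL HT X1 h u X2 c3 HX Hu H3.
  destruct X1 as [|x1 [|x2 X1']]; simpl in HX; inversion HX; [subst h u X2 | subst x1 h u X2 |].
  - eapply merge_rule_in_first; eauto.
  - eapply merge_rule_in_second; eauto.
  - destruct X1'; discriminate.
Qed.

(* The rule is box-left or diamond-right with principal component [f : A] or
   [e : B]; re-applying it to the merged component [e : A, B] only needs the
   side premisses for e instead of f, which [merge_side_premisses] provides. *)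
Lemma merge_shared n : adm_into n (merge_step f e) cfder ->
  forall c X Y c' T Z, merge_step f e X Y -> schema T Z ->
  (forall t, In t T -> hder n (premiss_at c' t)) ->
  forall a M X0 Z0 E, M <> [] -> X ~~ M ++ X0 -> Z ~~ M ++ Z0 ->
  ceq c (ccomp a (Hole (Z0 ++ E))) -> ceq c' (ccomp a (Hole (X0 ++ E))) -> cfder (fill c Y).
Proof.
  intros IH c X Y c' T Z [A [B [-> ->]]] HL HT a M X0 Z0 E HM H2 H3 H4 H5.
  destruct (two_comp_overlap _ _ _ _ _ _ _ _ _ HM H2 H3 HL) as [h [D [other [y0 [-> [Hh [HX0 HZ0]]]]]]].
  destruct (schema_comp_inv T [y0] h D [] HL) as [g0 [W [w [_ [_ [-> Hr]]]]]].
  destruct (fill_shared_hole _ _ _ _ _ _ [IComp e (A ++ B)] H4 H5) as [F1 _].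
  assert (F2 : forall V, fill c' V ~~ fill a (other :: E ++ V)).
  { intros V. destruct (fill_shared_hole _ _ _ _ _ _ V H4 H5) as [_ F]. eapply eqv_trans; [apply F|].
    apply fill_eqv. change (other :: E ++ V) with ([other] ++ E ++ V). apply eqv_app; auto. }
  eapply cfder_eqv with (fill (ccomp a (Hole E)) [y0; IComp e (A ++ B)]).
  2:{ apply eqv_sym. eapply eqv_trans; [apply F1|]. rewrite fill_ccomp_Hole. apply fill_eqv.
      eapply eqv_trans; [apply eqv_app; [apply HZ0|apply eqv_refl]|]. eqv_solve. }
  destruct (merge_side_premisses h g0) as [Hside1 Hside2].
  { destruct Hh as [[-> _]|[-> _]]; auto. }
  1,2: eapply hder_cfder, (HT (PFixed _)); simpl; auto.
  apply (cfder_rule _ _ _ (Hr e (A ++ B))). intros t [<-|[<-|[<-|[]]]]; simpl; auto.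
  assert (HM' := HT (PCtx (W ++ [IComp h (w :: D)])) (or_intror (or_intror (or_introl eq_refl)))).
  simpl in HM'. rewrite fill_ccomp_Hole.
  destruct Hh as [[-> [HDD ->]]|[-> [HDD ->]]].
  - eapply cfder_eqv;
      [apply (IH (ccomp a (Hole (E ++ W))) [IComp f (w :: D); IComp e B]);
         [eexists _, _; split; reflexivity|]|].
    + eapply hder_eqv; [apply HM'|]. eapply eqv_trans; [apply F2|]. rewrite fill_ccomp_Hole. apply fill_eqv.
      eqv_solve.
    + rewrite fill_ccomp_Hole, <- app_assoc.
      apply fill_eqv, eqv_app_r, eqv_app_r, eqv_single_comp, eqv_cons; auto.
      apply eqv_app; auto.
  - eapply cfder_eqv;
      [apply (IH (ccomp a (Hole (E ++ W))) [IComp f A; IComp e (w :: D)]);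
         [eexists _, _; split; reflexivity|]|].
    + eapply hder_eqv; [apply HM'|]. eapply eqv_trans; [apply F2|]. rewrite fill_ccomp_Hole. apply fill_eqv.
      eqv_solve.
    + rewrite fill_ccomp_Hole, <- app_assoc. apply fill_eqv, eqv_app_r, eqv_app_r, eqv_single_comp.
      eapply eqv_trans; [apply eqv_app_r, eqv_cons; [apply ie_refl|apply HDD]|]. eqv_solve.
Qed.

Lemma cfder_merge_comps n c A B :
  hder n (fill c [IComp f A; IComp e B]) -> cfder (fill c [IComp e (A ++ B)]).
Proof.
  apply (adm_by_overlap (merge_step f e) (fun _ => cfder) (fun _ => cfder_eqv) hder_cfder
           (fun _ => cfder_rule) (@merge_step_strip f e) merge_shared merge_rule_inside).
  exists A, B; auto.
Qed.

End MergeComponents.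

(** * Cut admissibility *)

Definition lift (Z Zp : seqnt) := forall n e, hder n (fill e Z) -> hder n (fill e Zp).

Lemma lift_refl Z : lift Z Z. Proof. intros n e H; auto. Qed.

Lemma lift_inv phi Y : invertible phi Y -> lift [IIn phi] Y.
Proof. intros HP n e HD. eapply hder_invert; eauto. Qed.

Lemma lift_weak Z W : lift Z (Z ++ W).
Proof. intros n e HD. apply hder_weaken; auto. Qed.

Lemma lift_comp_weak y h D w : lift [y; IComp h D] [y; IComp h (w :: D)].
Proof. intros n e HD. apply (hder_weaken_comp n e [y] h [w] D HD). Qed.

(* Every rule is height-preserving invertible on its input part. *)
Lemma lift_strip_rule T Z : schema T Z -> forall Zp, (In (PCtx Zp) T \/ In (PDown Zp) T) ->
  lift (strip Z) (strip Zp).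
Proof.
  intros HL Zp HZ. inversion HL; subst; simpl in HZ;
  repeat match goal with
  | H : _ \/ _ |- _ => destruct H as [H|H]
  | H : PCtx _ = PCtx _ |- _ => inversion H; subst; clear H
  | H : PDown _ = PDown _ |- _ => inversion H; subst; clear H
  | H : False |- _ => contradiction
  | H : _ = _ |- _ => discriminate H
  end; strip_simpl;
  try apply lift_refl;
  try (apply lift_inv; constructor);
  try (apply (lift_weak [])).
  apply lift_comp_weak.
Qed.

Definition cut_below (xi : form) (m : nat) := forall a b c, a + b < m ->
  hder a (fill (down c) [IOut xi]) -> hder b (fill c [IIn xi]) -> cfder (fill c []).

Definition cut_admissible_sub (xi : form) : Prop :=
  match xi with
  | And f g | Or f g | Imp f g | Box f g | Dia f g => cut_admissible f /\ cut_admissible g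
  | _ => True
  end.

Lemma cut_permute_right_disjoint xi a b c cR T Z K :
  cut_below xi (a + S b) -> schema T Z -> ceq c (plug2 K Z) -> ceq cR (plug1 K [IIn xi]) ->
  (forall t, In t T -> hder b (premiss_at cR t)) -> hder a (fill (down c) [IOut xi]) -> cfder (fill c []).
Proof.
  intros IH HL H1 H2 HT HLd.
  assert (HL0 : hder a (fill (plug1 (down2 K) [IOut xi]) (strip Z))).
  { eapply hder_eqv; [apply HLd|]. eapply eqv_trans; [apply ceq_fill; [apply ceq_down, H1|apply eqv_refl]|].
    rewrite down_plug2. apply fill_plug21. }
  apply cfder_eqv with (fill (plug1 K []) Z).
  2:{ eapply eqv_trans; [apply fill_plug12|]. apply ceq_fill; [apply ceq_sym; auto|apply eqv_refl]. }
  apply (cfder_rule _ T); auto. intros t Ht. assert (HTt := HT t Ht).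
  assert (Hlift : forall Zp, (In (PCtx Zp) T \/ In (PDown Zp) T) ->
            hder a (fill (down (plug2 (down2 K) Zp)) [IOut xi]) /\
              hder a (fill (down (plug2 K Zp)) [IOut xi])).
  { intros Zp HZp. assert (HLf := lift_strip_rule _ _ HL _ HZp _ _ HL0).
    rewrite !down_plug2, down2_down2. split; eapply hder_eqv; try apply HLf; apply fill_plug12. }
  destruct t as [Zp|Zp|s]; unfold premiss_at in *.
  - apply cfder_eqv with (fill (plug2 K Zp) []); [|apply eqv_sym, fill_plug12].
    apply (IH a b); [lia| apply Hlift; auto|].
    eapply hder_eqv; [apply HTt|]. eapply eqv_trans; [apply ceq_fill; [apply H2|apply eqv_refl]|].
    apply fill_plug12.
  - rewrite down_plug1. simpl.
    apply cfder_eqv with (fill (plug2 (down2 K) Zp) []); [|apply eqv_sym, fill_plug12].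
    apply (IH a b); [lia| apply Hlift; auto|].
    eapply hder_eqv; [apply HTt|]. eapply eqv_trans; [apply ceq_fill; [apply ceq_down, H2|apply eqv_refl]|].
    rewrite down_plug1. strip_simpl. apply fill_plug12.
  - exists b; auto.
Qed.

Lemma cut_permute_right_in_comp xi a b c cR T Z1 h u Z2 c3 :
  cut_below xi (a + S b) -> schema T (Z1 ++ IComp h u :: Z2) -> u ~~ fill c3 [IIn xi] ->
  ceq c (ccomp cR (Down (Z1 ++ Z2) h c3)) -> (forall t, In t T -> hder b (premiss_at cR t)) ->
  hder a (fill (down c) [IOut xi]) -> cfder (fill c []).
Proof.
  intros IH HL Hu H1 HT HLd.
  destruct (schema_comp_inv _ _ _ _ _ HL) as [g0 [W [w [-> [HW [-> Hr]]]]]].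
  rewrite app_nil_r in H1.
  apply cfder_eqv with (fill cR (Z1 ++ [IComp h (fill c3 [])])).
  2:{ apply eqv_sym. eapply eqv_trans; [apply ceq_fill; [apply H1|apply eqv_refl]|].
      rewrite fill_ccomp_Down; auto. }
  apply (cfder_rule _ _ _ (Hr h (fill c3 []))).
  intros t [<-|[<-|[<-|[]]]]; unfold premiss_at.
  1,2: eapply hder_cfder, (HT (PFixed _)); simpl; auto.
  assert (HM := HT _ (or_intror (or_intror (or_introl eq_refl)))). unfold premiss_at in HM.
  rewrite <- fill_ccomp_Down_cons. apply (IH a b); [lia| |].
  - rewrite fill_down_ccomp_Down_cons, HW. apply hder_weaken_comp. eapply hder_eqv; [apply HLd|].
    eapply eqv_trans; [apply ceq_fill; [apply ceq_down, H1|apply eqv_refl]|]. rewrite fill_down_ccomp_Down.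
    auto.
  - rewrite fill_ccomp_Down_cons. eapply hder_eqv; [apply HM|].
    apply fill_eqv, eqv_app_r, eqv_single_comp, eqv_cons; auto.
Qed.

(* An input rule ending the left premiss is applied below the cut, to its
   instance Zc located in c next to outputs O of c. *)
Lemma cut_permute_left_disjoint xi a b c K K' O T' Zc :
  cut_below xi (S a + b) -> schema T' Zc -> strip O = [] -> ceq c (plug2 K' (Zc ++ O)) ->
  ceq2 (down2 K') K -> nouts_ctx2 K = 0 -> hder b (fill c [IIn xi]) ->
  (forall Zp, In (PCtx Zp) T' -> hder a (fill (plug1 K [IOut xi]) (strip Zp)) /\ lift Zc Zp) ->
  (forall Zp, In (PDown Zp) T' -> cfder (fill (plug1 K []) Zp)) ->
  (forall s, In (PFixed s) T' -> cfder s) -> cfder (fill c []).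
Proof.
  intros IH HL HO H1 H2 H3 HR HTC HTD HTF.
  set (ct := ccomp (plug1 K' []) (Hole O)).
  assert (Ect : forall V, fill ct V = fill (plug1 K' []) (O ++ V))
    by (intros; unfold ct; rewrite fill_ccomp; reflexivity).
  apply cfder_eqv with (fill ct Zc).
  2:{ rewrite Ect. eapply eqv_trans; [apply fill_plug12|]. apply ceq_fill; [|auto].
      eapply ceq_trans; [apply ceq2_plug2; [apply ceq2_refl|apply eqv_app_comm]| apply ceq_sym, H1]. }
  apply (cfder_rule _ T'); auto. intros t Ht. destruct t as [Zp|Zp|s]; unfold premiss_at.
  - destruct (HTC Zp Ht) as [HLp Hlift].
    rewrite Ect. apply cfder_eqv with (fill (plug2 K' (O ++ Zp)) []); [|apply fill_plug21].
    apply (IH a b); [lia| |].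
    + rewrite down_plug2, strip_app, HO. simpl. eapply hder_eqv; [apply HLp|].
      eapply eqv_trans; [apply fill_plug12|].
      apply ceq_fill; [apply ceq2_plug2; [apply ceq2_sym; auto|auto]|auto].
    + set (cr := ccomp (plug1 K' [IIn xi]) (Hole O)).
      assert (Ecr : forall V, fill cr V = fill (plug1 K' [IIn xi]) (O ++ V))
        by (intros; unfold cr; rewrite fill_ccomp; reflexivity).
      eapply hder_eqv; [|apply fill_plug12]. rewrite <- Ecr. apply Hlift. rewrite Ecr.
      eapply hder_eqv; [apply HR|]. eapply eqv_trans; [apply ceq_fill; [apply H1|apply eqv_refl]|].
      eapply eqv_trans; [apply fill_plug21|]. apply fill_eqv, eqv_app_comm.
  - assert (HD := HTD Zp Ht). eapply cfder_eqv; [apply HD|].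
    unfold ct. rewrite down_ccomp, fill_ccomp, down_plug1. simpl. rewrite HO, strip_nil. simpl.
    apply ceq_fill; [apply ceq2_plug1; [apply ceq2_sym; auto|auto]|auto].
  - apply HTF; auto.
Qed.

Lemma cut_permute_left_in_comp xi a b c cL T Z1 h u Z2 c3 :
  cut_below xi (S a + b) -> schema T (Z1 ++ IComp h u :: Z2) -> u ~~ fill c3 [IOut xi] ->
  ceq (down c) (ccomp cL (Down (Z1 ++ Z2) h c3)) -> (forall t, In t T -> hder a (premiss_at cL t)) ->
  hder b (fill c [IIn xi]) -> cfder (fill c []).
Proof.
  intros IH HL Hu H1 HT HR.
  destruct (schema_comp_cases _ _ _ _ _ HL) as [y0 [-> [-> [_ [[g0 [g [-> ->]]]|[g0 [g [-> ->]]]]]]]].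
  2:{ exfalso. apply ceq_nouts_ctx in H1. rewrite nouts_ctx_down, nouts_ctx_ccomp in H1. simpl in H1.
      rewrite ?nouts_cons, ?nouts_single, ?nouts_item_out in H1. lia. }
  simpl in H1. destruct (unstrip_ccomp _ _ _ H1) as [c1 [c2 [H2 [H3 H4]]]].
  destruct c2 as [W|W h' c3']; simpl in H4; [contradiction|]. destruct H4 as [H4 [Eh H5]]; subst h'.
  destruct (strip_single_in _ _ H4) as [O [H6 H7]].
  set (cc := ccomp c1 (Hole O)).
  assert (Ecc : forall V, fill cc V = fill c1 (O ++ V))
    by (intros; unfold cc; rewrite fill_ccomp; reflexivity).
  assert (Ec : forall V, fill c V ~~ fill cc [IIn (Box g0 g); IComp h (fill c3' V)]).
  { intros V. eapply eqv_trans; [apply ceq_fill; [apply H2|apply eqv_refl]|].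
    rewrite fill_ccomp_Down, Ecc. apply fill_eqv.
    eapply eqv_trans; [apply eqv_app; [apply H6|apply eqv_refl]|]. eqv_solve. }
  apply cfder_eqv with (fill cc [IIn (Box g0 g); IComp h (fill c3' [])]); [|apply eqv_sym, Ec].
  apply (cfder_rule _ [PFixed [IIn g0; IOut h]; PFixed [IIn h; IOut g0];
                       PCtx [IIn (Box g0 g); IComp h (IIn g :: fill c3' [])]]); [constructor|].
  intros t [<-|[<-|[<-|[]]]]; unfold premiss_at.
  - exists a; apply (HT (PFixed _)); simpl; auto.
  - exists a; apply (HT (PFixed _)); simpl; auto.
  - assert (HM := HT _ (or_intror (or_intror (or_introl eq_refl)))). unfold premiss_at in HM.
    set (cn := ccomp cc (Down [IIn (Box g0 g)] h (ccomp (Hole [IIn g]) c3'))).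
    assert (E1 : fill cn [] = fill cc [IIn (Box g0 g); IComp h (IIn g :: fill c3' [])])
      by (unfold cn; rewrite fill_ccomp_Down_cons; reflexivity).
    rewrite <- E1. apply (IH a b); [lia| |].
    + unfold cn. rewrite fill_down_ccomp_Down_cons. unfold cc. rewrite down_ccomp, fill_ccomp. simpl.
      rewrite H7. simpl.
      strip_simpl. eapply hder_eqv; [apply HM|].
      eapply eqv_trans; [|apply ceq_fill; [apply ceq_sym, H3|apply eqv_refl]].
      apply fill_eqv. apply eqv_cons; auto. apply eqv_single_comp. apply eqv_cons; auto.
      eapply eqv_trans; [apply Hu|]. apply ceq_fill; [apply ceq_sym, H5|auto].
    + unfold cn. rewrite fill_ccomp_Down_cons. simpl. apply lift_comp_weak.
      eapply hder_eqv; [apply HR|]. apply Ec.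
Qed.

Lemma left_premiss a' cL K xi Zp Zp' : ceq cL (plug1 K [IOut xi]) -> hder a' (fill cL Zp) ->
  Zp ~~ strip Zp' ->
  hder a' (fill (plug1 K [IOut xi]) (strip Zp')).
Proof. intros H1 H2 H3. eapply hder_eqv; [apply H2|]. apply ceq_fill; auto. Qed.

Lemma left_premiss_down a' cL K xi Zp : nouts_ctx2 K = 0 -> ceq cL (plug1 K [IOut xi]) ->
  hder a' (fill (down cL) Zp) ->
  cfder (fill (plug1 K []) Zp).
Proof.
  intros H0 H1 H2. exists a'. eapply hder_eqv; [apply H2|]. apply ceq_fill; auto.
  eapply ceq_trans; [apply ceq_down, H1|]. rewrite down_plug1. strip_simpl.
  apply ceq2_plug1; auto. apply down2_nouts_ctx0; auto.
Qed.

Lemma schema_single_in T phi : schema T [IIn phi] ->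
  (forall Zp, In (PCtx Zp) T -> invertible phi Zp /\ strip Zp = Zp) /\ (forall s, ~ In (PFixed s) T).
Proof.
  intros HL; inversion HL; subst; split; intros ? H; simpl in H;
    repeat destruct H as [H|H]; try discriminate; try contradiction;
    inversion H; subst; split; constructor.
Qed.

Lemma cut_left_disjoint_in xi a' b c cL TL phi K K' Z' :
  cut_below xi (S a' + b) -> schema TL [IIn phi] -> nouts_ctx2 K = 0 -> ceq cL (plug1 K [IOut xi]) ->
  (forall t, In t TL -> hder a' (premiss_at cL t)) -> hder b (fill c [IIn xi]) ->
  ceq c (plug2 K' Z') -> ceq2 (down2 K') K -> strip Z' ~~ [IIn phi] -> cfder (fill c []).
Proof.
  intros IH HL HK H2 HT HR H6 H7 H8.
  destruct (schema_single_in _ _ HL) as [HC HF].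
  destruct (strip_single_in _ _ H8) as [O [HZ' HO]].
  apply (cut_permute_left_disjoint xi a' b c K K' O _ _ IH HL HO); auto.
  - eapply ceq_trans; [apply H6|]. apply ceq2_plug2; [apply ceq2_refl|auto].
  - intros Zp HZp. destruct (HC Zp HZp) as [Hinv Hs]. split; [|apply lift_inv; auto].
    eapply left_premiss; [apply H2|apply (HT (PCtx _) HZp)|]. rewrite Hs; auto.
  - intros Zp HZp. eapply left_premiss_down; eauto. apply (HT (PDown _)); auto.
  - intros s Hs. contradiction (HF s).
Qed.

Lemma cut_left_disjoint_box xi a' b c cL f g e D K K' Z' :
  cut_below xi (S a' + b) -> nouts_ctx2 K = 0 -> ceq cL (plug1 K [IOut xi]) ->
  (forall t, In t [PFixed [IIn f; IOut e]; PFixed [IIn e; IOut f];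
                   PCtx [IIn (Box f g); IComp e (IIn g :: D)]] ->
     hder a' (premiss_at cL t)) -> hder b (fill c [IIn xi]) ->
  ceq c (plug2 K' Z') -> ceq2 (down2 K') K -> strip Z' ~~ [IIn (Box f g); IComp e D] -> cfder (fill c []).
Proof.
  intros IH HK H2 HT HR H6 H7 H8.
  destruct (strip_split Z' [IIn (Box f g)] [IComp e D] H8) as [s1 [s2 [HZ1 [HZ2 HZ3]]]].
  destruct (strip_single_in _ _ HZ2) as [O1 [HO1 HO1']].
  destruct (strip_single_comp _ _ _ HZ3) as [D' [O2 [HO2 [HO2' HD']]]].
  apply (cut_permute_left_disjoint xi a' b c K K' (O1 ++ O2) _ _ IH (s_boxL f g e D')); auto.
  - rewrite strip_app, HO1', HO2'; auto.
  - eapply ceq_trans; [apply H6|]. apply ceq2_plug2; [apply ceq2_refl|].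
    eapply eqv_trans; [apply HZ1|]. eapply eqv_trans; [apply eqv_app; [apply HO1|apply HO2]|]. eqv_solve.
  - intros Zp [HZ|[HZ|[HZ|[]]]]; inversion HZ; subst. split; [|apply lift_comp_weak].
    eapply left_premiss; [apply H2|apply (HT (PCtx _)); simpl; auto|]. strip_simpl.
    apply eqv_cons; auto. apply eqv_single_comp. apply eqv_cons; auto. apply eqv_sym; auto.
  - intros Zp [HZ|[HZ|[HZ|[]]]]; discriminate.
  - intros s [HZ|[HZ|[HZ|[]]]]; inversion HZ; subst; exists a'; apply (HT (PFixed _)); simpl; auto.
Qed.

(* If the cut formula is not active in the left premiss, the last rule there is
   an input rule, since down c has no outputs. *)
Lemma cut_left_disjoint xi a' b c cL TL ZL K :
  cut_below xi (S a' + b) -> schema TL ZL -> ceq (down c) (plug2 K ZL) -> ceq cL (plug1 K [IOut xi]) ->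
  (forall t, In t TL -> hder a' (premiss_at cL t)) -> hder b (fill c [IIn xi]) -> cfder (fill c []).
Proof.
  intros IH HL H1 H2 HT HR.
  assert (Hnc := ceq_nouts_ctx _ _ H1). rewrite nouts_ctx_down, nouts_ctx_plug2 in Hnc.
  assert (HK : nouts_ctx2 K = 0) by lia.
  destruct (unstrip_plug2 _ _ _ H1) as [K' [Z' [H6 [H7 H8]]]].
  inversion HL; subst;
    rewrite ?nouts_cons, ?nouts_single, ?nouts_item_in, ?nouts_item_out, ?nouts_nil,
      ?nouts_item_comp in Hnc;
    try lia; try (eapply cut_left_disjoint_in; eauto; fail).
  eapply cut_left_disjoint_box; eauto.
Qed.

Lemma cut_atom p n c cR Z0 : hder n (fill (down c) [IOut (Var p)]) -> Z0 ~~ [IOut (Var p)] ->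
  (forall Y, fill c Y ~~ fill cR (Z0 ++ Y)) ->
  (forall Y, fill (down c) Y ~~ fill (down cR) (strip Z0 ++ Y)) -> cfder (fill c []).
Proof.
  intros HL HZ0 FR FRd. exists n.
  apply hder_eqv with (fill cR [IOut (Var p)]).
  2:{ apply eqv_sym. eapply eqv_trans; [apply FR|]. rewrite app_nil_r; apply fill_eqv; auto. }
  apply hder_restore. eapply hder_eqv; [apply HL|]. eapply eqv_trans; [apply FRd|].
  apply strip_eqv, eqv_nil_r in HZ0. rewrite HZ0. auto.
Qed.

Lemma cut_admissible_app xi c X : cut_admissible xi ->
  cfder (fill (down c) (strip X ++ [IOut xi])) -> cfder (fill c (X ++ [IIn xi])) -> cfder (fill c X).
Proof.
  intros HC H1 H2. rewrite <- (app_nil_r X), <- fill_ccomp_Hole.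
  apply HC; rewrite ?fill_down_ccomp_Hole, ?fill_ccomp_Hole; auto.
Qed.

Lemma cut_and f g c : cut_admissible f -> cut_admissible g ->
  cfder (fill (down c) [IOut f]) -> cfder (fill (down c) [IOut g]) -> cfder (fill c [IIn f; IIn g]) ->
  cfder (fill c []).
Proof.
  intros Cf Cg Hf Hg H. apply Cg; auto. apply (cut_admissible_app f c [IIn g] Cf).
  - eapply cfder_eqv; [apply (cfder_weaken _ _ [IIn g] Hf)|]. apply fill_eqv; strip_simpl; eqv_solve.
  - eapply cfder_eqv; [apply H|]. apply fill_eqv; eqv_solve.
Qed.

Lemma cut_imp f g c : cut_admissible f -> cut_admissible g ->
  cfder (fill (down c) [IOut f]) -> cfder (fill (down c) [IIn f; IOut g]) -> cfder (fill c [IIn g]) ->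
  cfder (fill c []).
Proof.
  intros Cf Cg Hf Hfg Hg. apply Cg; auto. apply (cut_admissible_app f (down c) [IOut g] Cf).
  - rewrite down_down. strip_simpl. auto.
  - eapply cfder_eqv; [apply Hfg|]. apply fill_eqv; eqv_solve.
Qed.

Lemma cut_in_comp g e D c : cut_admissible g ->
  cfder (fill (down c) [IComp e (IOut g :: strip D)]) -> cfder (fill c [IComp e (IIn g :: D)]) ->
  cfder (fill c [IComp e D]).
Proof.
  intros Cg H1 H2.
  apply cfder_eqv with (fill (ccomp c (Down [] e (Hole D))) []);
    [|rewrite fill_ccomp_Down_Hole, app_nil_r; auto].
  apply Cg.
  - rewrite fill_down_ccomp_Down_Hole. eapply cfder_eqv; [apply H1|]. apply fill_eqv, eqv_single_comp.
    eqv_solve.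
  - rewrite fill_ccomp_Down_Hole. eapply cfder_eqv; [apply H2|]. apply fill_eqv, eqv_single_comp. eqv_solve.
Qed.

Lemma cut_principal_box f g e D a' b' c cL cR :
  cut_admissible f -> cut_admissible g -> cut_below (Box f g) (S a' + S b') ->
  hder (S a') (fill (down c) [IOut (Box f g)]) -> hder a' (fill cL [IComp f [IOut g]]) ->
  (forall Y, fill (down c) Y ~~ fill cL Y) ->
  cfder [IIn f; IOut e] -> cfder [IIn e; IOut f] ->
  hder b' (fill cR [IIn (Box f g); IComp e (IIn g :: D)]) ->
  (forall Y, fill c Y ~~ fill cR (IComp e D :: Y)) ->
  (forall Y, fill (down c) Y ~~ fill (down cR) (IComp e (strip D) :: Y)) -> cfder (fill c []).
Proof.
  intros Cf Cg IH HLd HL FL Hfe Hef HR FR FRd.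
  apply cfder_eqv with (fill cR [IComp e D]);
    [|eapply eqv_trans; [|apply eqv_sym, FR]; apply fill_eqv; eqv_solve].
  apply (cut_in_comp g); auto.
  - change (IOut g :: strip D) with ([IOut g] ++ strip D).
    eapply (cfder_merge_comps f e Cf Hfe Hef).
    eapply hder_eqv; [apply HL|]. eapply eqv_trans; [apply eqv_sym, FL|].
    eapply eqv_trans; [apply FRd|]. apply fill_eqv; eqv_solve.
  - rewrite <- (app_nil_r [IComp e (IIn g :: D)]), <- fill_ccomp_Hole. apply (IH (S a') b'); [lia| |].
    + rewrite fill_down_ccomp_Hole. strip_simpl.
      apply hder_eqv with (fill (down cR) [IOut (Box f g); IComp e (IIn g :: strip D)]);
        [|apply fill_eqv; eqv_solve].
      apply lift_comp_weak. eapply hder_eqv; [apply HLd|]. eapply eqv_trans; [apply FRd|].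
      apply fill_eqv; eqv_solve.
    + rewrite fill_ccomp_Hole. eapply hder_eqv; [apply HR|]. apply fill_eqv. eqv_solve.
Qed.

(* The component [e : D] of the diamond-right rule lies in down c; it is first
   located in c itself. *)
Lemma cut_principal_dia f g e D a' c cL a0 E :
  cut_admissible f -> cut_admissible g ->
  ceq (down c) (ccomp a0 (Hole ([IComp e D] ++ E))) -> ceq cL (ccomp a0 (Hole E)) ->
  cfder [IIn f; IOut e] -> cfder [IIn e; IOut f] -> cfder (fill cL [IComp e (IOut g :: D)]) ->
  hder a' (fill c [IComp f [IIn g]]) -> cfder (fill c []).
Proof.
  intros Cf Cg H4 H5 Hfe Hef HL HR.
  destruct (unstrip_ccomp _ _ _ H4) as [c1 [c2 [H6 [H7 H8]]]].
  destruct c2 as [W|W q c3]; simpl in H8; [|contradiction].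
  destruct (strip_split _ [IComp e D] E H8) as [w1 [w2 [HW1 [HW2 HW3]]]].
  destruct (strip_single_comp _ _ _ HW2) as [D' [O [HO1 [HO2 HD']]]].
  set (cc := ccomp c1 (Hole (O ++ w2))).
  assert (Fc : forall Y, fill c Y ~~ fill cc (IComp e D' :: Y)).
  { intros Y. eapply eqv_trans; [apply ceq_fill; [apply H6|apply eqv_refl]|].
    unfold cc. rewrite !fill_ccomp_Hole.
    apply fill_eqv. eapply eqv_trans; [apply eqv_app; [apply HW1|apply eqv_refl]|].
    eapply eqv_trans; [apply eqv_app; [apply eqv_app; [apply HO1|apply eqv_refl]|apply eqv_refl]|].
    eqv_solve. }
  assert (Fcd : forall Y, fill (down cc) Y ~~ fill cL Y).
  { intros Y. unfold cc. rewrite fill_down_ccomp_Hole, strip_app, HO2. simpl.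
    eapply eqv_trans; [apply ceq_fill; [apply H7|apply eqv_refl]|].
    eapply eqv_trans; [|apply ceq_fill; [apply ceq_sym, H5|apply eqv_refl]]. rewrite fill_ccomp_Hole.
    apply fill_eqv. apply eqv_app; auto. }
  apply cfder_eqv with (fill cc [IComp e D']);
    [|eapply eqv_trans; [|apply eqv_sym, Fc]; apply fill_eqv; eqv_solve].
  apply (cut_in_comp g); auto.
  - eapply cfder_eqv; [apply HL|]. eapply eqv_trans; [|apply eqv_sym, Fcd].
    apply fill_eqv, eqv_single_comp, eqv_cons; auto. apply eqv_sym; auto.
  - change (IIn g :: D') with ([IIn g] ++ D').
    eapply (cfder_merge_comps f e Cf Hfe Hef).
    eapply hder_eqv; [apply HR|]. eapply eqv_trans; [apply Fc|]. apply fill_eqv; eqv_solve.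
Qed.

Lemma cut_principal xi a' b' c cL TL ZL cR TR ZR Z0 ZR0 a0 E a1 E1 :
  cut_admissible_sub xi -> cut_below xi (S a' + S b') ->
  hder (S a') (fill (down c) [IOut xi]) -> hder (S b') (fill c [IIn xi]) ->
  schema TL ZL -> ZL ~~ IOut xi :: Z0 -> ceq (down c) (ccomp a0 (Hole (Z0 ++ E))) ->
    ceq cL (ccomp a0 (Hole E)) ->
  (forall t, In t TL -> hder a' (premiss_at cL t)) ->
  schema TR ZR -> ZR ~~ IIn xi :: ZR0 -> ceq c (ccomp a1 (Hole (ZR0 ++ E1))) ->
    ceq cR (ccomp a1 (Hole E1)) ->
  (forall t, In t TR -> hder b' (premiss_at cR t)) -> cfder (fill c []).
Proof.
  intros HS IH HLd HRd HLr HZL H4 H5 HTL HRr HZR H4' H5' HTR.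
  destruct (fill_shared_hole_down _ _ _ _ _ H4 H5) as [FL _].
  destruct (fill_shared_hole_down _ _ _ _ _ H4' H5') as [FR FRd].
  assert (PL := principal_out_shape _ _ _ _ HLr HZL). assert (PR := principal_in_shape _ _ _ _ HRr HZR).
  assert (HL : forall Zp, In (PCtx Zp) TL -> cfder (fill cL Zp))
    by (intros; eapply hder_cfder, (HTL (PCtx _)); auto).
  assert (HR : forall Zp, In (PCtx Zp) TR -> cfder (fill cR Zp))
    by (intros; eapply hder_cfder, (HTR (PCtx _)); auto).
  destruct xi as [p| |f g|f g|f g|f g|f g]; simpl in HS.
  - destruct PR as [-> HZ0]. eapply cut_atom; eauto.
  - contradiction.
  - destruct HS as [Cf Cg]. destruct PL as [-> ->]. destruct PR as [-> ->].
    apply cut_and with f g; auto.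
    1,2: eapply cfder_eqv; [|apply eqv_sym, FL]; apply HL; simpl; auto.
    eapply cfder_eqv; [|apply eqv_sym, FR]; apply HR; simpl; auto.
  - destruct HS as [Cf Cg]. destruct PR as [-> ->]. destruct PL as [[-> | ->] ->]; [apply Cf|apply Cg].
    all: try (eapply cfder_eqv; [|apply eqv_sym, FL]; apply HL; simpl; auto; fail).
    all: eapply cfder_eqv; [|apply eqv_sym, FR]; apply HR; simpl; auto.
  - destruct HS as [Cf Cg]. destruct PL as [-> ->]. destruct PR as [-> ->].
    apply cut_imp with f g; auto.
    + rewrite <- (app_nil_r [IOut f]), <- fill_ccomp_Hole. apply (IH (S a') b'); [lia| |].
      * rewrite fill_down_ccomp_Hole, down_down. strip_simpl. auto.
      * rewrite fill_ccomp_Hole.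
        eapply hder_eqv; [apply (HTR (PDown [IIn (Imp f g); IOut f])); simpl; auto|].
        simpl. eapply eqv_trans; [|apply eqv_sym, FRd]. apply fill_eqv. simpl. eqv_solve.
    + eapply cfder_eqv; [apply HL; simpl; auto|]. apply eqv_sym, FL.
    + eapply cfder_eqv; [apply HR; simpl; auto|]. apply eqv_sym, FR.
  - destruct HS as [Cf Cg]. destruct PL as [-> ->]. destruct PR as [e [D [-> HZ0]]].
    apply (cut_principal_box f g e D a' b' c cL cR); auto.
    + apply (HTL (PCtx _)); simpl; auto.
    + eapply hder_cfder, (HTR (PFixed _)); simpl; auto.
    + eapply hder_cfder, (HTR (PFixed _)); simpl; auto.
    + apply (HTR (PCtx _)); simpl; auto.
    + intros Y. eapply eqv_trans; [apply FR|]. apply fill_eqv. apply (eqv_app _ _ Y Y HZ0); auto.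
    + intros Y. eapply eqv_trans; [apply FRd|]. apply fill_eqv. apply strip_eqv in HZ0. strip_simpl.
      apply (eqv_app _ _ Y Y HZ0); auto.
  - destruct HS as [Cf Cg]. destruct PL as [e [D [-> HZ0]]]. destruct PR as [-> ->].
    apply (cut_principal_dia f g e D b' c cL a0 E); auto.
    + eapply ceq_trans; [apply H4|]. apply ceq_ccomp; [apply ceq_refl|]. apply eqv_app; auto.
    + eapply hder_cfder, (HTL (PFixed _)); simpl; auto.
    + eapply hder_cfder, (HTL (PFixed _)); simpl; auto.
    + apply HL; simpl; auto.
    + eapply hder_eqv; [|apply eqv_sym, FR]. apply (HTR (PCtx _)); simpl; auto.
Qed.

Lemma cut_step xi a b c : cut_admissible_sub xi -> cut_below xi (a + b) ->
  hder a (fill (down c) [IOut xi]) -> hder b (fill c [IIn xi]) -> cfder (fill c []).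
Proof.
  intros HS IH HLd HRd.
  inversion HLd as [a' cL TL ZL sL HLr HLs HTL]; subst a.
  destruct (fill_eqv_overlap (down c) [IOut xi] cL ZL (eqv_sym _ _ HLs))
    as [K H1 H2|Z1 h u Z2 c3 H1 H2 H3|X1 h u X2 c3 H1 H2 H3|a0 M X0 Z0 E H1 H2 H3 H4 H5].
  - eapply cut_left_disjoint; eauto.
  - subst ZL. eapply cut_permute_left_in_comp; eauto.
  - destruct X1 as [|? []]; discriminate.
  - destruct (eqv_single_app _ _ _ H2 H1) as [y [-> [-> Hy]]]. apply ie_out_inv in Hy. subst y.
    inversion HRd as [b' cR TR ZR sR HRr HRs HTR]; subst b.
    destruct (fill_eqv_overlap c [IIn xi] cR ZR (eqv_sym _ _ HRs))
      as [K H1' H2'|Z1 h u Z2 c3 H1' H2' H3'|X1 h u X2 c3 H1' H2' H3'|a1 M' X0' ZR0 E1 H1' H2' H3' H4' H5'].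
    + eapply cut_permute_right_disjoint; eauto.
    + subst ZR. eapply cut_permute_right_in_comp; eauto.
    + destruct X1 as [|? []]; discriminate.
    + destruct (eqv_single_app _ _ _ H2' H1') as [y [-> [-> Hy]]]. apply ie_in_inv in Hy. subst y.
      apply (cut_principal xi a' b' c cL TL ZL cR TR ZR Z0 ZR0 a0 E a1 E1); auto.
Qed.

Lemma cut_below_all xi : cut_admissible_sub xi -> forall m, cut_below xi m.
Proof.
  intros HS m. induction m as [|m IH]; intros a b c Hlt HL HR; [lia|].
  destruct (PeanoNat.Nat.lt_ge_cases (a + b) m) as [Hl|Hge].
  - eapply IH; eauto.
  - assert (a + b = m) by lia. subst m. eapply cut_step; eauto.
Qed.

Theorem cut_admissibility xi : cut_admissible xi.
Proof.
  induction xi; intros c [a HL] [b HR];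
  refine (cut_below_all _ _ (S (a + b)) a b c _ HL HR); try lia; simpl; try split; auto.
Qed.

(** * Back to N.IntCK *)

Lemma intck_rule_schema P C :
  intck_rule P C <-> exists c T Z, schema T Z /\ C = fill c Z /\ P = map (premiss_at c) T.
Proof.
  split.
  - intros H; inversion H; subst.
    + exists c, [], [IIn (Var p); IOut (Var p)]; repeat split; constructor.
    + exists c, [], [IIn Bot]; repeat split; constructor.
    + eexists c, _, _; split; [apply s_andL|split; reflexivity].
    + eexists c, _, _; split; [apply s_andR|split; reflexivity].
    + eexists c, _, _; split; [apply s_orL|split; reflexivity].
    + eexists c, _, _; split; [apply s_orR1|split; reflexivity].
    + eexists c, _, _; split; [apply s_orR2|split; reflexivity].
    + eexists c, _, _; split; [apply s_impL|split; reflexivity].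
    + eexists c, _, _; split; [apply s_impR|split; reflexivity].
    + eexists c, _, _; split; [apply s_boxL|split; reflexivity].
    + eexists c, _, _; split; [apply s_boxR|split; reflexivity].
    + eexists c, _, _; split; [apply s_diaL|split; reflexivity].
    + eexists c, _, _; split; [apply s_diaR|split; reflexivity].
  - intros [c [T [Z [HL [-> ->]]]]]. inversion HL; subst; simpl; constructor.
Qed.

Lemma cfder_of_derivable_cut G : derivable intck_cut_rule G -> cfder G.
Proof.
  induction 1 as [prems concl HR Hn Hpn Hd IH|s t He Hd IH].
  - destruct HR as [HR|HR].
    + apply intck_rule_schema in HR as [c [T [Z [HL [-> ->]]]]].
      apply (cfder_rule _ T); auto. intros t Ht. apply IH. apply in_map; auto.
    + inversion HR; subst. apply (cut_admissibility xi c); apply IH; simpl; auto.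
  - eapply cfder_eqv; eauto.
Qed.

Lemma schema_premiss_nested T Z c : schema T Z -> nested (fill c Z) -> forall t, In t T ->
  nested (premiss_at c t).
Proof.
  unfold nested. intros HL Hn t Ht. rewrite nouts_fill in Hn.
  inversion HL; subst; simpl in Ht;
  repeat match goal with H : _ \/ _ |- _ => destruct H as [H|H] | H : False |- _ => contradiction end;
  subst; unfold premiss_at; rewrite ?nouts_fill, ?nouts_ctx_down; nouts_simpl; nouts_simpl;
    rewrite ?nouts_app in *; nouts_simpl;
  rewrite ?nouts_cons, ?nouts_single, ?nouts_item_in, ?nouts_item_out, ?nouts_nil, ?nouts_item_comp in Hn;
    lia.
Qed.

Lemma hder_derivable n s : hder n s -> nested s -> derivable intck_rule s.
Proof.
  induction 1 as [n c T Z s HL Hs HT IH]. intros Hn.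
  assert (Hn' : nested (fill c Z)) by (unfold nested in *; rewrite (nouts_eqv _ _ Hs); auto).
  apply der_equiv with (fill c Z); auto.
  apply der_rule with (map (premiss_at c) T).
  - apply intck_rule_schema. exists c, T, Z; auto.
  - auto.
  - intros p Hp. apply in_map_iff in Hp as [t [<- Ht]]. eapply schema_premiss_nested; eauto.
  - intros p Hp. apply in_map_iff in Hp as [t [<- Ht]]. apply IH; auto. eapply schema_premiss_nested; eauto.
Qed.

Theorem theorem2 (G : seqnt) :
  nested G -> derivable intck_cut_rule G -> derivable intck_rule G.
Proof.
  intros Hn Hd. destruct (cfder_of_derivable_cut _ Hd) as [n Hn'].
  eapply hder_derivable; eauto.
Qed.
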